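(* A strong CCTRS $\mathcal R$ is quasi-decreasing (i.e., every term in $\mathcal T(\mathcal F,\mathcal V)$ is quasi-decreasing) if and only if the context-sensitive TRS $(\Xi(\mathcal R),\mu)$ is terminating on all terms in the set $\{\zeta(s)\mid s\in\mathcal T(\mathcal G,\mathcal V)\}$.
   Context: A CCTRS over $\mathcal F$ is a set $\mathcal R$ of conditional rules each of the form $f(\ell_1,\dots,\ell_n)\to r\Leftarrow a_1\approx b_1,\dots,a_k\approx b_k$ (defined symbols are roots of left-hand sides, others constructors; constructor terms contain only constructors and variables) where $\ell_1,\dots,\ell_n,b_1,\dots,b_k$ are constructor terms, the terms $f(\ell_1,\dots,\ell_n),b_1,\dots,b_k$ pairwise share no variables, $\mathrm{Var}(r)\subseteq\mathrm{Var}(\ell_1,\dots,\ell_n,b_1,\dots,b_k)$, and $\mathrm{Var}(a_i)\subseteq\mathrm{Var}(\ell_1,\dots,\ell_n,b_1,\dots,b_{i-1})$. The rewrite relation: $s\to_{\mathcal R}t$ iff there are a position $p$, a rule and $\sigma$ with $s|_p=\ell\sigma$, $t=s[r\sigma]_p$ and $a_j\sigma\to^*_{\mathcal R}b_j\sigma$ for all $j$ (formally the union of the standard approximations). $\mathcal R{\restriction}f$ is the set of rules with left-hand root $f$. A strong CCTRS is a CCTRS with each $\mathcal R{\restriction}f$ finite and each $f(\ell_1,\dots,\ell_n)$ and $b_j$ linear. Let $m_f=|\mathcal R{\restriction}f|$ (0 for constructors), with fixed enumeration $\rho^f_1,\dots,\rho^f_{m_f}$. Write $s\sqsupset t$ if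 there are a position $p$, a rule, $\sigma$ and $1\le i\le k$ with $s|_p=\ell\sigma$, $a_j\sigma\to^*b_j\sigma$ for $j<i$ and $t=a_i\sigma$; a term $s$ is quasi-decreasing if there is no infinite sequence $s=u_0\,(\to\cup\sqsupset)\,u_1\,(\to\cup\sqsupset)\cdots$. $\mathcal G$ is the labeled signature: constructors of $\mathcal F$ plus symbols $f_R$ (same arity as $f$) for each defined $f$ and $R\subseteq\mathcal R{\restriction}f$. The transformed system: signature $\mathcal H$ with constants $\bot,\top$ ($\mu=\emptyset$); every $f\in\mathcal F$ of arity $n$ as a symbol of arity $n+m_f$ with $\mu(f)=\{1,\dots,n\}$; and for every defined $f$ of arity $n$, every $\rho^f_i$ with $k>0$ conditions and $1\le j\le k$ a symbol $f_i^j$ of arity $n+m_f+j-1$ with $\mu(f_i^j)=\{n+i+j-1\}$. A position is active in $t$ if it is $\epsilon$ or $iq$ with $i\in\mu(\mathrm{root}(t))$ and $q$ active in $t|_i$; $\to_{\Xi(\mathcal R),\mu}$ rewrites only at active positions. $\xi_\star$ ($\star\in\{\bot,\top\}$): identity on variables, homomorphic on constructors, $f(t_1..t_n)\mapsto f(\xi_\star(t_1),\dots,\xi_\star(t_n),\star,\dots,\star)$ ($m_f$ copies) for defined $f$. For a linear constructor term $t$: $\mathrm{AP}(x)=\emptyset$, and $\mathrm{AP}(f(t_1,\dots,t_n))$ consists of $g(x_1,\dots,x_m)$ for every constructor $g\neq f$ of arity $m$, $g(x_1,\dots,x_m,\bot,\dots,\bot)$ for every defined $g$ of arity $m$, and $f(x_1,\dots,x_{i-1},u,x_{i+1},\dots,x_n)$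 for $u\in\mathrm{AP}(t_i)$ (fresh distinct $x$'s). Notation: $\langle t_1,\dots,t_n\rangle[u_1,\dots,u_j]_i$ is $t_1,\dots,t_{i-1},u_1,\dots,u_j,t_{i+1},\dots,t_n$. For the $i$-th rule $\rho_i\colon f(\vec\ell)\to r\Leftarrow a_1\approx b_1,\dots,a_k\approx b_k$ of $\mathcal R{\restriction}f$ and fresh distinct $x_1,\dots,x_{m_f},y_1,\dots,y_n$, $\Xi(\mathcal R)$ contains: $(1)$ if $k=0$: $f(\vec\ell,\langle\vec x\rangle[\top]_i)\to\xi_\top(r)$; if $k>0$: $(2)$ $f(\vec\ell,\langle\vec x\rangle[\top]_i)\to f_i^1(\vec\ell,\langle\vec x\rangle[\xi_\top(a_1)]_i)$, $(3)$ $f_i^k(\vec\ell,\langle\vec x\rangle[b_1,\dots,b_k]_i)\to\xi_\top(r)$, $(4)$ for $1\le j<k$: $f_i^j(\vec\ell,\langle\vec x\rangle[b_1,\dots,b_j]_i)\to f_i^{j+1}(\vec\ell,\langle\vec x\rangle[b_1,\dots,b_j,\xi_\top(a_{j+1})]_i)$, $(5)$ for $1\le j\le k$ and $v\in\mathrm{AP}(b_j)$ (fresh variables): $f_i^j(\vec\ell,\langle\vec x\rangle[b_1,\dots,b_{j-1},v]_i)\to f(\vec\ell,\langle\vec x\rangle[\bot]_i)$; and for any $k$: $(6)$ for $1\le j\le n$ and $v\in\mathrm{AP}(\ell_j)$ (fresh variables): $f(\langle\vec y\rangle[v]_j,\langle\vec x\rangle[\top]_i)\to f(\langle\vec y\rangle[v]_j,\langle\vec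 x\rangle[\bot]_i)$. The map $\zeta\colon\mathcal T(\mathcal G,\mathcal V)\to\mathcal T(\mathcal H,\mathcal V)$: identity on variables, homomorphic on constructors, $\zeta(f_R(t_1,\dots,t_n))=f(\zeta(t_1),\dots,\zeta(t_n),c_1,\dots,c_{m_f})$ with $c_i=\top$ iff $\rho^f_i\in R$, else $\bot$. *)

From Stdlib Require Import List Relations.
Import ListNotations.
Set Implicit Arguments.

Inductive term (S : Type) : Type :=
| Var (x : nat)
| App (f : S) (ts : list (term S)).
Arguments Var {S} x.
Arguments App {S} f ts.

Fixpoint vars {S} (t : term S) : list nat :=
  match t with
  | Var x => [x]
  | App _ ts => (fix go (l : list (term S)) : list nat :=
                   match l with [] => [] | u :: l' => vars u ++ go l' end) ts
  end.

Definition linear {S} (t : term S) : Prop := NoDup (vars t).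

Fixpoint term_all {S} (P : S -> nat -> Prop) (t : term S) : Prop :=
  match t with
  | Var _ => True
  | App f ts => P f (length ts) /\
      (fix go (l : list (term S)) : Prop :=
         match l with [] => True | u :: l' => term_all P u /\ go l' end) ts
  end.

Fixpoint subst {S} (sigma : nat -> term S) (t : term S) : term S :=
  match t with
  | Var x => sigma x
  | App f ts => App f (map (subst sigma) ts)
  end.

Inductive subterm_eq {S} : term S -> term S -> Prop :=
| st_refl t : subterm_eq t t
| st_arg u f ts t : In t ts -> subterm_eq u t -> subterm_eq u (App f ts).

Inductive ctx {S} (r : term S -> term S -> Prop) : term S -> term S -> Prop :=
| ctx_root s t : r s t -> ctx r s t
| ctx_arg f ss1 s t ss2 :
    ctx r s t -> ctx r (App f (ss1 ++ s :: ss2)) (App f (ss1 ++ t :: ss2)).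

(* closure under contexts at active positions only (positions 1-based) *)
Inductive csctx {S} (mu : S -> nat -> bool) (r : term S -> term S -> Prop)
  : term S -> term S -> Prop :=
| csctx_root s t : r s t -> csctx mu r s t
| csctx_arg f ss1 s t ss2 :
    mu f (Datatypes.S (length ss1)) = true ->
    csctx mu r s t -> csctx mu r (App f (ss1 ++ s :: ss2)) (App f (ss1 ++ t :: ss2)).

Record crule (F : Type) := CRule {
  cr_lhs : term F;
  cr_rhs : term F;
  cr_conds : list (term F * term F)
}.
Arguments CRule {F}.

(* <t_1..t_n>[u_1..u_j]_i  (i is 1-based) *)
Definition repl {A} (ts : list A) (i : nat) (us : list A) : list A :=
  firstn (i - 1) ts ++ us ++ skipn i ts.

Section CCTRS.
Context {F : Type} (arity : F -> nat) (rules : F -> list (crule F)).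
(* rules f is the fixed enumeration rho^f_1, ..., rho^f_{m_f} of R|f;
   R is the union over f of the rules f.  f is defined iff rules f <> []. *)

Definition m (f : F) : nat := length (rules f).
Definition is_constructor (f : F) : Prop := rules f = [].

Definition wf (t : term F) : Prop := term_all (fun f n => n = arity f) t.
Definition constructor_term (t : term F) : Prop :=
  term_all (fun f n => n = arity f /\ is_constructor f) t.

Definition in_R (rho : crule F) : Prop := exists f, In rho (rules f).

Definition strong_cctrs : Prop :=
  forall f, NoDup (rules f) /\
  forall rho, In rho (rules f) ->
    let l := cr_lhs rho in
    let cs := cr_conds rho in
    let bs := map snd cs in
    (exists ls, l = App f ls /\ Forall constructor_term ls) /\
    wf l /\ wf (cr_rhs rho) /\ Forall (fun c => wf (fst c) /\ wf (snd c)) cs /\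
    Forall constructor_term bs /\
    (* f(l_1..l_n), b_1, ..., b_k pairwise share no variables *)
    (forall i j x, i < j < length (l :: bs) ->
        In x (vars (nth i (l :: bs) l)) -> ~ In x (vars (nth j (l :: bs) l))) /\
    incl (vars (cr_rhs rho)) (vars l ++ flat_map vars bs) /\
    (forall i, i < length cs ->
        incl (vars (fst (nth i cs (l, l)))) (vars l ++ flat_map vars (firstn i bs))) /\
    (* strong: linear lhs and linear b_j *)
    linear l /\ Forall linear bs.

Definition root_rel (Q : term F -> term F -> Prop) (s t : term F) : Prop :=
  exists rho sigma, in_R rho /\
    s = subst sigma (cr_lhs rho) /\ t = subst sigma (cr_rhs rho) /\
    Forall (fun c => Q (subst sigma (fst c)) (subst sigma (snd c))) (cr_conds rho).

Fixpoint approx (n : nat) : term F -> term F -> Prop :=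
  match n with
  | 0 => fun _ _ => False
  | S n' => ctx (root_rel (clos_refl_trans _ (approx n')))
  end.

Definition step (s t : term F) : Prop := exists n, approx n s t.

Definition sqsup (s t : term F) : Prop :=
  exists u rho sigma i, subterm_eq u s /\ in_R rho /\
    u = subst sigma (cr_lhs rho) /\ i < length (cr_conds rho) /\
    (forall j, j < i ->
       clos_refl_trans _ step (subst sigma (fst (nth j (cr_conds rho) (Var 0, Var 0))))
                              (subst sigma (snd (nth j (cr_conds rho) (Var 0, Var 0))))) /\
    t = subst sigma (fst (nth i (cr_conds rho) (Var 0, Var 0))).

Definition quasi_decreasing_term (s : term F) : Prop :=
  ~ exists u : nat -> term F, u 0 = s /\
      forall k, step (u k) (u (S k)) \/ sqsup (u k) (u (S k)).

Definition quasi_decreasing : Prop :=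
  forall s, wf s -> quasi_decreasing_term s.

Inductive Gsym : Type :=
| GC (f : F)
| GD (f : F) (R : list bool).  (* f_R, R ⊆ R|f given by its characteristic
                                  vector w.r.t. rho^f_1..rho^f_{m_f} *)

Definition wfG (t : term Gsym) : Prop :=
  term_all (fun g n => match g with
                       | GC f => is_constructor f /\ n = arity f
                       | GD f R => ~ is_constructor f /\ length R = m f /\ n = arity f
                       end) t.

Inductive Hsym : Type :=
| HBot | HTop
| HF (f : F)                     (* f with arity n + m_f *)
| HAux (f : F) (i j : nat).      (* f_i^j, i and j 1-based *)

Definition mu (g : Hsym) (p : nat) : bool :=
  match g with
  | HBot | HTop => false
  | HF f => Nat.leb 1 p && Nat.leb p (arity f)
  | HAux f i j => Nat.eqb p (arity f + i + j - 1)
  end.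

Definition bot : term Hsym := App HBot [].
Definition top : term Hsym := App HTop [].

Fixpoint xi (star : term Hsym) (t : term F) : term Hsym :=
  match t with
  | Var x => Var x
  | App f ts => App (HF f) (map (xi star) ts ++ repeat star (m f))
  end.

Fixpoint zeta (t : term Gsym) : term Hsym :=
  match t with
  | Var x => Var x
  | App (GC f) ts => App (HF f) (map zeta ts)
  | App (GD f R) ts => App (HF f) (map zeta ts ++ map (fun b : bool => if b then top else bot) R)
  end.

(* AP(t): shapes; the freshness/distinctness of the variables is imposed
   by requiring the left-hand sides of Xi(R) to be linear. *)
Inductive AP : term F -> term Hsym -> Prop :=
| AP_con f ts g xs : is_constructor g -> g <> f -> length xs = arity g ->
    AP (App f ts) (App (HF g) (map Var xs))
| AP_def f ts g xs : ~ is_constructor g -> length xs = arity g ->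
    AP (App f ts) (App (HF g) (map Var xs ++ repeat bot (m g)))
| AP_arg f ts1 t ts2 u xs1 xs2 : AP t u ->
    length xs1 = length ts1 -> length xs2 = length ts2 ->
    AP (App f (ts1 ++ t :: ts2)) (App (HF f) (map Var xs1 ++ u :: map Var xs2)).

Definition cnth (cs : list (term F * term F)) (j : nat) : term F * term F :=
  nth (j - 1) cs (Var 0, Var 0).   (* j-th condition, 1-based *)

(* Xi(R): the rules generated from the i-th rule of R|f (i 1-based) *)
Definition xi_rule (l r : term Hsym) : Prop :=
  linear l /\
  exists f i rho ls xs,
    1 <= i /\ nth_error (rules f) (i - 1) = Some rho /\
    cr_lhs rho = App f ls /\ length xs = m f /\
    let L := map (xi top) ls in
    let X := map (@Var Hsym) xs in
    let cs := cr_conds rho in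
    let k := length cs in
    let B := map (fun c => xi top (snd c)) cs in
    (
      (k = 0 /\ l = App (HF f) (L ++ repl X i [top]) /\ r = xi top (cr_rhs rho))
    \/
      (0 < k /\ l = App (HF f) (L ++ repl X i [top]) /\
       r = App (HAux f i 1) (L ++ repl X i [xi top (fst (cnth cs 1))]))
    \/
      (0 < k /\ l = App (HAux f i k) (L ++ repl X i B) /\ r = xi top (cr_rhs rho))
    \/
      (exists j, 1 <= j < k /\
        l = App (HAux f i j) (L ++ repl X i (firstn j B)) /\
        r = App (HAux f i (S j))
              (L ++ repl X i (firstn j B ++ [xi top (fst (cnth cs (S j)))])))
    \/
      (exists j v, 1 <= j <= k /\ AP (snd (cnth cs j)) v /\
        l = App (HAux f i j) (L ++ repl X i (firstn (j - 1) B ++ [v])) /\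
        r = App (HF f) (L ++ repl X i [bot]))
    \/
      (exists ys j v, length ys = length ls /\ 1 <= j <= length ls /\
        AP (nth (j - 1) ls (Var 0)) v /\
        l = App (HF f) (repl (map (@Var Hsym) ys) j [v] ++ repl X i [top]) /\
        r = App (HF f) (repl (map (@Var Hsym) ys) j [v] ++ repl X i [bot]))).

Definition xi_root (s t : term Hsym) : Prop :=
  exists l r sigma, xi_rule l r /\ s = subst sigma l /\ t = subst sigma r.

Definition cs_step : term Hsym -> term Hsym -> Prop := csctx mu xi_root.

Definition cs_terminating_on (P : term Hsym -> Prop) : Prop :=
  forall t, P t -> ~ exists u : nat -> term Hsym, u 0 = t /\
      forall k, cs_step (u k) (u (S k)).

End CCTRS.

(** (=>) Erasing the extra arguments maps Ξ(R)-reductions from terms [ζ(s)]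
    back to R.  Every reachable term satisfies an invariant: each subterm
    [f_i^j(L, …, c_1, …, c_j, …)] records an instance [θ] of rule [ρ_i]
    with [erase L = l⃗θ], [erase c_p = b_pθ] for [p < j] and
    [a_pθ ->* erase c_p] for [p ≤ j].  Under the invariant each step either performs an R-step on the
    erasure, or leaves the erasure unchanged and decreases the lexicographic
    pair (number of ⊤ flags, number of conditions still to evaluate).
    Termination then follows by well-founded induction along [-> ∪ ⊐ ∪ ▷]
    from the erasure, which is well founded by quasi-decreasingness; the
    active argument [c_j] of an auxiliary symbol descends from [a_jθ], a
    [⊐]-successor of its erasure [lθ].

    (<=) Ξ(R) simulates R: if [s] is well formed and [s -> t], then [ξ_⊤(s)]
    rewrites in one or more steps to [ξ_⊤(t)], the conditions of the applied
    rule being evaluated one after the other in the active argument of the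
    auxiliary symbols [f_i^j].  If [s ⊐ t], then [ξ_⊤(s)] rewrites to a term
    having [ξ_⊤(t)] at an active position.  Since [ξ_⊤(s) = ζ(s')], where
    [s'] labels every defined symbol with all its rules, an infinite
    [(-> ∪ ⊐)]-chain from [s] yields an infinite [Ξ(R),μ]-reduction. *)
From Stdlib Require Import List Relations Wellfounded Lia Arith Classical ClassicalEpsilon Permutation.
Import ListNotations.
Set Implicit Arguments.

Section Terms.
Context {S : Type}.

Lemma term_ind_in (P : term S -> Prop) :
  (forall x, P (Var x)) ->
  (forall f ts, (forall t, In t ts -> P t) -> P (App f ts)) ->
  forall t, P t.
Proof.
  intros HV HA. fix IH 1. intros [x|f ts].
  - apply HV.
  - apply HA. induction ts as [|u ts IHts]; simpl; intros t Ht.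
    + destruct Ht.
    + destruct Ht as [<-|Ht]; [apply IH|apply IHts; exact Ht].
Qed.

Lemma vars_App (f : S) ts : vars (App f ts) = flat_map vars ts.
Proof. simpl. induction ts; simpl; congruence. Qed.

Lemma term_all_App P (f : S) ts :
  term_all P (App f ts) <-> P f (length ts) /\ Forall (term_all P) ts.
Proof.
  simpl. split; intros [H1 H2]; split; auto; clear H1.
  - induction ts; simpl in *; auto. destruct H2; constructor; auto.
  - induction ts; simpl in *; auto. inversion H2; subst; split; auto. apply IHts; auto.
Qed.

Lemma subst_ext (s1 s2 : nat -> term S) t :
  (forall x, In x (vars t) -> s1 x = s2 x) -> subst s1 t = subst s2 t.
Proof.
  induction t using term_ind_in; intros Hx.
  - apply Hx. simpl; auto.
  - simpl. f_equal. apply map_ext_in. intros u Hu. apply H; auto.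
    intros x Hxu. apply Hx. rewrite vars_App, in_flat_map. eauto.
Qed.

Lemma subst_inj_vars (s1 s2 : nat -> term S) t :
  subst s1 t = subst s2 t -> forall x, In x (vars t) -> s1 x = s2 x.
Proof.
  induction t using term_ind_in; intros E y Hy.
  - simpl in *. destruct Hy as [<-|[]]; auto.
  - rewrite vars_App, in_flat_map in Hy. destruct Hy as [u [Hu Hy]].
    simpl in E. injection E as E.
    apply (H u Hu); auto.
    clear -E Hu. induction ts; simpl in *; [destruct Hu|].
    injection E as E1 E2. destruct Hu as [<-|Hu]; auto.
Qed.

Lemma subst_Var t : subst (@Var S) t = t.
Proof.
  induction t using term_ind_in; simpl; auto. f_equal.
  rewrite <- (map_id ts) at 2. apply map_ext_in; auto.
Qed.

Lemma subterm_trans (a b c : term S) : subterm_eq a b -> subterm_eq b c -> subterm_eq a c.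
Proof. intros H1 H2. induction H2; auto. econstructor; eauto. Qed.

Lemma subterm_arg f ts (t : term S) : In t ts -> subterm_eq t (App f ts).
Proof. intros Ht. econstructor; [exact Ht|constructor]. Qed.

Lemma subterm_subst_var (sg : nat -> term S) t x :
  In x (vars t) -> subterm_eq (sg x) (subst sg t).
Proof.
  induction t using term_ind_in; intros Hx.
  - simpl in Hx. destruct Hx as [<-|[]]. constructor.
  - rewrite vars_App, in_flat_map in Hx. destruct Hx as [u [Hu Hx]].
    simpl. econstructor. apply in_map; eauto. auto.
Qed.

Lemma term_all_subterm P (u t : term S) :
  subterm_eq u t -> term_all P t -> term_all P u.
Proof.
  induction 1; auto. intros Ht. apply IHsubterm_eq.
  apply term_all_App in Ht. destruct Ht as [_ Ht]. rewrite Forall_forall in Ht; auto.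
Qed.

Lemma term_all_subst P (sg : nat -> term S) t :
  term_all P t -> (forall x, In x (vars t) -> term_all P (sg x)) ->
  term_all P (subst sg t).
Proof.
  induction t using term_ind_in; intros Ht Hx.
  - apply Hx. simpl; auto.
  - simpl subst. apply term_all_App in Ht. destruct Ht as [Hf Ht].
    apply term_all_App. rewrite length_map. split; auto.
    rewrite Forall_forall in *. intros u Hu. apply in_map_iff in Hu.
    destruct Hu as [v [<- Hv]]. apply H; auto.
    intros x Hxv. apply Hx. rewrite vars_App, in_flat_map; eauto.
Qed.

Lemma term_all_subst_var P (sg : nat -> term S) t x :
  term_all P (subst sg t) -> In x (vars t) -> term_all P (sg x).
Proof. intros H Hx. eapply term_all_subterm; [apply subterm_subst_var; eauto|auto]. Qed.

End Terms.

Section Lists.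
Context {A : Type}.

Lemma app_inj_length (a b a' b' : list A) :
  length a = length a' -> a ++ b = a' ++ b' -> a = a' /\ b = b'.
Proof.
  revert a'. induction a; destruct a'; simpl; intros; try discriminate; auto.
  injection H as H. injection H0 as -> H0. destruct (IHa a' H H0); subst; auto.
Qed.

Lemma firstn_succ_nth (l : list A) j d : j < length l ->
  firstn (S j) l = firstn j l ++ [nth j l d].
Proof.
  revert l; induction j; destruct l; simpl; intros; try lia; auto.
  f_equal. apply IHj. lia.
Qed.

Lemma firstn_app_exact (l1 l2 : list A) n : length l1 = n -> firstn n (l1 ++ l2) = l1.
Proof. intros <-. rewrite firstn_app, firstn_all, Nat.sub_diag. simpl. apply app_nil_r. Qed.

Lemma firstn_app_le (l1 l2 : list A) n : n <= length l1 -> firstn n (l1 ++ l2) = firstn n l1.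
Proof. intros Hl. rewrite firstn_app. replace (n - length l1) with 0 by lia. simpl. apply app_nil_r. Qed.

Lemma firstn_app_cons (l1 l2 : list A) x n : length l1 < n ->
  firstn n (l1 ++ x :: l2) = l1 ++ x :: firstn (n - S (length l1)) l2.
Proof.
  intros Hl. rewrite firstn_app. rewrite firstn_all2 by lia. f_equal.
  replace (n - length l1) with (S (n - S (length l1))) by lia. reflexivity.
Qed.

Lemma in_firstn (x : A) n l : In x (firstn n l) -> In x l.
Proof. intros H. rewrite <- (firstn_skipn n l). apply in_or_app; auto. Qed.

Lemma in_skipn (x : A) n l : In x (skipn n l) -> In x l.
Proof. intros H. rewrite <- (firstn_skipn n l). apply in_or_app; auto. Qed.

Lemma firstn_repeat (a : A) k n : firstn k (repeat a n) = repeat a (Nat.min k n).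
Proof. revert n; induction k; destruct n; simpl; auto. f_equal; auto. Qed.

Lemma skipn_repeat (a : A) k n : skipn k (repeat a n) = repeat a (n - k).
Proof. revert n; induction k; destruct n; simpl; auto. Qed.

Lemma map_repl {B} (g : A -> B) l i us :
  map g (repl l i us) = repl (map g l) i (map g us).
Proof. unfold repl. rewrite !map_app, firstn_map, skipn_map. auto. Qed.

Lemma length_repl (l : list A) i us : 1 <= i <= length l ->
  length (repl l i us) = length l - 1 + length us.
Proof.
  intros Hi. unfold repl. rewrite !length_app, length_firstn, length_skipn. lia.
Qed.

Lemma repl_repeat (a : A) n i : 1 <= i <= n -> repl (repeat a n) i [a] = repeat a n.
Proof.
  intros Hi. unfold repl. rewrite firstn_repeat, skipn_repeat.
  replace n with (Nat.min (i-1) n + (1 + (n - i))) at 3 by lia.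
  rewrite !repeat_app. reflexivity.
Qed.

Lemma Forall_repl (P : A -> Prop) l i us : Forall P l -> Forall P us -> Forall P (repl l i us).
Proof.
  intros H1 H2. unfold repl. rewrite Forall_forall in *. intros x Hx.
  apply in_app_or in Hx. destruct Hx as [Hx|Hx]; [apply H1; eapply in_firstn; eauto|].
  apply in_app_or in Hx. destruct Hx as [Hx|Hx]; [apply H2; auto|apply H1; eapply in_skipn; eauto].
Qed.

Lemma skipn_app_repl (Lh Xl cs' : list A) n i : length Lh = n ->
  skipn n (Lh ++ repl Xl i cs') = firstn (i-1) Xl ++ cs' ++ skipn i Xl.
Proof. intros <-. rewrite skipn_app, skipn_all, Nat.sub_diag. reflexivity. Qed.

Lemma app_cons_split_lt (l1 l2 A1 B : list A) s : l1 ++ s :: l2 = A1 ++ B -> length l1 < length A1 ->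
  exists A2, A1 = l1 ++ s :: A2 /\ l2 = A2 ++ B.
Proof.
  revert A1. induction l1 as [|x l1 IH]; intros A1 E Hl; destruct A1 as [|y A1]; simpl in *; try lia.
  - injection E as -> ->. exists A1; auto.
  - injection E as -> E. destruct (IH A1 E) as [A2 [-> ->]]; [lia|]. exists A2; auto.
Qed.

End Lists.

Lemma Acc_of_no_chain {A} (R : A -> A -> Prop) x :
  ~ (exists u : nat -> A, u 0 = x /\ forall k, R (u k) (u (S k))) ->
  Acc (fun a b => R b a) x.
Proof.
  intros Hn. apply NNPP. intros HA. apply Hn.
  assert (Hnext : forall y : {y | ~ Acc (fun a b => R b a) y},
            {z : {y | ~ Acc (fun a b => R b a) y} | R (proj1_sig y) (proj1_sig z)}).
  { intros [y Hy]. apply constructive_indefinite_description.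
    apply NNPP. intros Hc. apply Hy. constructor. intros z Hz.
    apply NNPP. intros Hz'. apply Hc. exists (exist _ z Hz'). simpl. auto. }
  set (g := fun y => proj1_sig (Hnext y)).
  exists (fun k => proj1_sig (Nat.iter k g (exist _ x HA))). split; auto.
  intros k. cbn [Nat.iter]. unfold g.
  exact (proj2_sig (Hnext (Nat.iter k g (exist _ x HA)))).
Qed.

Lemma no_chain_of_Acc {A} (R : A -> A -> Prop) x :
  Acc (fun a b => R b a) x ->
  ~ (exists u : nat -> A, u 0 = x /\ forall k, R (u k) (u (S k))).
Proof.
  induction 1 as [x _ IH]. intros [u [<- Hu]].
  apply (IH (u 1) (Hu 0)). exists (fun k => u (S k)). auto.
Qed.

Lemma Acc_clos_trans_flip {A} (R : A -> A -> Prop) x :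
  Acc (fun a b => R b a) x -> Acc (fun a b => clos_trans _ R b a) x.
Proof.
  intros Ha. apply Acc_clos_trans in Ha. revert Ha. apply Acc_incl.
  intros a b Hab. induction Hab. - apply t_step; auto. - eapply t_trans; eauto.
Qed.

Lemma clos_rt_mono {A} (r1 r2 : A -> A -> Prop) :
  (forall a b, r1 a b -> r2 a b) -> forall a b, clos_refl_trans _ r1 a b -> clos_refl_trans _ r2 a b.
Proof. intros H a b Hc. induction Hc; eauto using rt_step, rt_refl, rt_trans. Qed.

Section ConditionalRewriting.
Context {F : Type} (rules : F -> list (crule F)).

Lemma ctx_mono (r1 r2 : term F -> term F -> Prop) :
  (forall a b, r1 a b -> r2 a b) -> forall a b, ctx r1 a b -> ctx r2 a b.
Proof. intros H a b Hc. induction Hc; [apply ctx_root|apply ctx_arg]; auto. Qed.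

Lemma root_rel_mono (Q1 Q2 : term F -> term F -> Prop) :
  (forall a b, Q1 a b -> Q2 a b) -> forall a b, root_rel rules Q1 a b -> root_rel rules Q2 a b.
Proof.
  intros H a b [rho [sg [H1 [H2 [H3 H4]]]]]. exists rho, sg. repeat split; auto.
  eapply Forall_impl; [|exact H4]. simpl; auto.
Qed.

Lemma approx_succ n a b : approx rules n a b -> approx rules (S n) a b.
Proof.
  revert a b. induction n; intros a b H; [destruct H|].
  change (ctx (root_rel rules (clos_refl_trans _ (approx rules n))) a b) in H.
  change (ctx (root_rel rules (clos_refl_trans _ (approx rules (S n)))) a b).
  eapply ctx_mono; [|exact H]. apply root_rel_mono. apply clos_rt_mono. auto.
Qed.

Lemma approx_mono n n' a b : n <= n' -> approx rules n a b -> approx rules n' a b.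
Proof. induction 1; auto using approx_succ. Qed.

Lemma rt_approx_mono n n' a b : n <= n' ->
  clos_refl_trans _ (approx rules n) a b -> clos_refl_trans _ (approx rules n') a b.
Proof. intros Hn. apply clos_rt_mono. intros; eapply approx_mono; eauto. Qed.

Lemma rt_step_approx a b : clos_refl_trans _ (step rules) a b ->
  exists n, clos_refl_trans _ (approx rules n) a b.
Proof.
  induction 1.
  - destruct H as [n Hn]. exists n. apply rt_step; auto.
  - exists 0. apply rt_refl.
  - destruct IHclos_refl_trans1 as [n1 H1], IHclos_refl_trans2 as [n2 H2].
    exists (Nat.max n1 n2). apply rt_trans with y.
    + eapply rt_approx_mono; [|exact H1]. lia.
    + eapply rt_approx_mono; [|exact H2]. lia.
Qed.

Lemma conds_rt_approx (sg : nat -> term F) (cs : list (term F * term F)) :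
  Forall (fun c => clos_refl_trans _ (step rules) (subst sg (fst c)) (subst sg (snd c))) cs ->
  exists n, Forall (fun c => clos_refl_trans _ (approx rules n) (subst sg (fst c)) (subst sg (snd c))) cs.
Proof.
  induction 1. - exists 0; auto.
  - destruct IHForall as [n2 H2]. destruct (rt_step_approx H) as [n1 H1].
    exists (Nat.max n1 n2). constructor.
    + eapply rt_approx_mono; [|exact H1]. lia.
    + eapply Forall_impl; [|exact H2]. intros c Hc. eapply rt_approx_mono; [|exact Hc]. lia.
Qed.

Lemma step_rule_instance rho (sg : nat -> term F) :
  in_R rules rho ->
  Forall (fun c => clos_refl_trans _ (step rules) (subst sg (fst c)) (subst sg (snd c))) (cr_conds rho) ->
  step rules (subst sg (cr_lhs rho)) (subst sg (cr_rhs rho)).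
Proof.
  intros HR HF. edestruct conds_rt_approx as [n Hn]; [exact HF|]. exists (S n).
  apply ctx_root. exists rho, sg. auto.
Qed.

Lemma step_arg f ss1 s t ss2 : step rules s t ->
  step rules (App f (ss1 ++ s :: ss2)) (App f (ss1 ++ t :: ss2)).
Proof.
  intros [n Hn]. exists n. destruct n; [destruct Hn|]. apply ctx_arg. exact Hn.
Qed.

Lemma step_lift_subterm u s t : subterm_eq u s -> step rules u t ->
  exists s', step rules s s' /\ subterm_eq t s'.
Proof.
  induction 1; intros Hs.
  - exists t. split; auto. constructor.
  - destruct (IHsubterm_eq Hs) as [s' [H1 H2]].
    destruct (in_split _ _ H) as [l1 [l2 ->]].
    exists (App f (l1 ++ s' :: l2)). split. apply step_arg; auto.
    econstructor; [|exact H2]. apply in_or_app; simpl; auto.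
Qed.

Lemma sqsup_lift_subterm u s t : subterm_eq u s -> sqsup rules u t -> sqsup rules s t.
Proof.
  intros Hu [w [rho [sg [i [H1 H]]]]]. exists w, rho, sg, i. split; auto.
  eapply subterm_trans; eauto.
Qed.

End ConditionalRewriting.

Section StrongRules.
Context {F : Type} (arity : F -> nat) (rules : F -> list (crule F)).
Hypothesis Hs : strong_cctrs arity rules.
Context {f : F} {rho : crule F}.
Hypothesis Hin : In rho (rules f).

Definition rule_bs (r : crule F) := map snd (cr_conds r).

Lemma strong_rule_lhs : exists ls, cr_lhs rho = App f ls.
Proof. destruct (proj2 (Hs f) rho Hin) as [[ls [Hl _]] _]. eauto. Qed.

Lemma strong_rule_wf_lhs : wf arity (cr_lhs rho).
Proof. apply (proj2 (Hs f) rho Hin). Qed.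

Lemma strong_rule_wf_rhs : wf arity (cr_rhs rho).
Proof. apply (proj2 (Hs f) rho Hin). Qed.

Lemma strong_rule_wf_cond c : In c (cr_conds rho) -> wf arity (fst c) /\ wf arity (snd c).
Proof.
  destruct (proj2 (Hs f) rho Hin) as [_ [_ [_ [Hc _]]]]. rewrite Forall_forall in Hc. auto.
Qed.

Lemma strong_rule_rhs_vars :
  incl (vars (cr_rhs rho)) (vars (cr_lhs rho) ++ flat_map vars (rule_bs rho)).
Proof. apply (proj2 (Hs f) rho Hin). Qed.

Lemma strong_rule_cond_vars i : i < length (cr_conds rho) ->
  incl (vars (fst (nth i (cr_conds rho) (Var 0, Var 0))))
       (vars (cr_lhs rho) ++ flat_map vars (firstn i (rule_bs rho))).
Proof.
  destruct (proj2 (Hs f) rho Hin) as [_ [_ [_ [_ [_ [_ [_ [Ha _]]]]]]]].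
  intros Hi. rewrite (nth_indep _ _ (cr_lhs rho, cr_lhs rho)); auto.
Qed.

Lemma strong_rule_vars_NoDup : NoDup (vars (cr_lhs rho) ++ flat_map vars (rule_bs rho)).
Proof.
  destruct (proj2 (Hs f) rho Hin) as [_ [_ [_ [_ [_ [Hdis [_ [_ [Hlin Hlinb]]]]]]]]].
  set (l := cr_lhs rho) in *. unfold rule_bs. set (bs := map snd (cr_conds rho)) in *.
  change (NoDup (flat_map vars (l :: bs))).
  assert (Hall : forall t, In t (l :: bs) -> NoDup (vars t)).
  { intros t [<-|Ht]; auto. rewrite Forall_forall in Hlinb; apply Hlinb; auto. }
  clear -Hall Hdis. generalize dependent (l :: bs). intros L Hdis Hall.
  induction L as [|a L IH]; simpl; [constructor|].
  apply NoDup_app.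
  - apply Hall; simpl; auto.
  - apply IH. intros i j x Hij H1. apply (Hdis (S i) (S j) x); simpl; auto; lia.
    intros t Ht; apply Hall; simpl; auto.
  - intros x Hx Hx'. apply in_flat_map in Hx'. destruct Hx' as [t [Ht Hxt]].
    destruct (In_nth _ _ l Ht) as [j [Hj Hn]].
    apply (Hdis 0 (S j) x); simpl; auto; try lia. rewrite Hn. auto.
Qed.

End StrongRules.

Lemma NoDup_vars_prefix {F} (l : term F) (bs : list (term F)) j :
  NoDup (vars l ++ flat_map vars bs) -> NoDup (vars l ++ flat_map vars (firstn j bs)).
Proof.
  intros Hn. rewrite <- (firstn_skipn j bs) in Hn. rewrite flat_map_app, app_assoc in Hn.
  eapply NoDup_app_remove_r; eauto.
Qed.

Lemma incl_vars_prefix {F} (l : term F) (bs : list (term F)) j :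
  incl (vars l ++ flat_map vars (firstn j bs)) (vars l ++ flat_map vars bs).
Proof.
  rewrite <- (firstn_skipn j bs) at 2. rewrite flat_map_app. intros x Hx.
  apply in_app_or in Hx. apply in_or_app. destruct Hx; auto. right; apply in_or_app; auto.
Qed.

Section Transformation.
Context {F : Type} (arity : F -> nat) (rules : F -> list (crule F)).
Local Notation H := (term (@Hsym F)).
Local Notation X := (xi rules top).

Lemma xi_subst (sg : nat -> term F) t :
  X (subst sg t) = subst (fun x => X (sg x)) (X t).
Proof.
  induction t using term_ind_in; simpl; auto. f_equal.
  rewrite map_app, !map_map, map_repeat. f_equal. apply map_ext_in; auto.
Qed.

Lemma flat_map_vars_repeat_top n : flat_map (@vars (@Hsym F)) (repeat top n) = [].
Proof. induction n; simpl; auto. Qed.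

Lemma vars_xi t : vars (X t) = vars t.
Proof.
  induction t using term_ind_in; [reflexivity|]. simpl xi.
  rewrite vars_App, (vars_App f), flat_map_app, flat_map_vars_repeat_top, app_nil_r.
  rewrite !flat_map_concat_map, map_map. f_equal. apply map_ext_in. auto.
Qed.

Lemma flat_map_vars_xi (ls : list (term F)) : flat_map vars (map X ls) = flat_map vars ls.
Proof. rewrite !flat_map_concat_map, map_map. f_equal. apply map_ext. intros; apply vars_xi. Qed.

Lemma flat_map_vars_Var (l : list nat) : flat_map (@vars (@Hsym F)) (map Var l) = l.
Proof. induction l; simpl; congruence. Qed.

Lemma mu_HF_arg f p : p < arity f -> mu arity (HF f) (S p) = true.
Proof. intros Hp. unfold mu. apply andb_true_intro; split; apply Nat.leb_le; lia. Qed.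

Inductive active_ctx (w : H) : H -> Prop :=
| active_here : active_ctx w w
| active_arg g ss1 t ss2 : mu arity g (S (length ss1)) = true -> active_ctx w t ->
    active_ctx w (App g (ss1 ++ t :: ss2)).

Lemma active_ctx_trans w t u : active_ctx w t -> active_ctx t u -> active_ctx w u.
Proof. intros H1 H2. induction H2; auto. constructor; auto. Qed.

Lemma active_ctx_step w w' T : active_ctx w T -> cs_step arity rules w w' ->
  exists T', active_ctx w' T' /\ cs_step arity rules T T'.
Proof.
  induction 1; intros Hs.
  - exists w'. split; [constructor|auto].
  - destruct (IHactive_ctx Hs) as [T' [H1 H2]]. exists (App g (ss1 ++ T' :: ss2)).
    split. constructor; auto. apply csctx_arg; auto.
Qed.

Lemma active_ctx_ct w w' T : active_ctx w T -> clos_trans _ (cs_step arity rules) w w' ->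
  exists T', active_ctx w' T' /\ clos_trans _ (cs_step arity rules) T T'.
Proof.
  intros HT Hr. revert T HT. induction Hr; intros T HT.
  - destruct (active_ctx_step HT H) as [T' [? ?]]. exists T'; split; auto. apply t_step; auto.
  - destruct (IHHr1 T HT) as [T1 [A1 B1]]. destruct (IHHr2 T1 A1) as [T2 [A2 B2]].
    exists T2; split; auto. eapply t_trans; eauto.
Qed.

Lemma xi_subterm_active u w : wf arity u -> subterm_eq w u -> active_ctx (X w) (X u).
Proof.
  intros Hw Hs. induction Hs as [|w f ts t Hin Hs IHHs]. - constructor.
  - destruct (in_split _ _ Hin) as [l1 [l2 ->]].
    unfold wf in Hw. apply term_all_App in Hw. destruct Hw as [Hl Hw].
    simpl. rewrite map_app. simpl. rewrite <- app_assoc. simpl.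
    constructor.
    + rewrite length_map. apply mu_HF_arg. rewrite length_app in Hl. simpl in Hl. lia.
    + apply IHHs. rewrite Forall_forall in Hw. apply Hw. apply in_or_app; simpl; auto.
Qed.

Lemma cs_rt_arg g pre post w w' : mu arity g (S (length pre)) = true ->
  clos_refl_trans _ (cs_step arity rules) w w' ->
  clos_refl_trans _ (cs_step arity rules) (App g (pre ++ w :: post)) (App g (pre ++ w' :: post)).
Proof.
  intros Hm Hr. induction Hr.
  - apply rt_step. apply csctx_arg; auto.
  - apply rt_refl.
  - eapply rt_trans; eauto.
Qed.

Lemma cs_ct_arg g pre post w w' : mu arity g (S (length pre)) = true ->
  clos_trans _ (cs_step arity rules) w w' ->
  clos_trans _ (cs_step arity rules) (App g (pre ++ w :: post)) (App g (pre ++ w' :: post)).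
Proof.
  intros Hm Hr. induction Hr.
  - apply t_step. apply csctx_arg; auto.
  - eapply t_trans; eauto.
Qed.

(* Left-hand sides of Ξ(R) are built from [ξ_⊤(l_k)], the [ξ_⊤(b_j)] and
   the fresh variables [N, N+1, …] above all variables of the rule. *)
Lemma linear_xi_pattern g ls (us : list H) C N mf i :
  NoDup (flat_map vars ls ++ C) -> (forall x, In x (flat_map vars ls ++ C) -> x < N) ->
  flat_map vars us = C -> 1 <= i <= mf ->
  linear (App g (map X ls ++ repl (map Var (seq N mf)) i us)).
Proof.
  intros Hnd HN HC Hi. unfold linear. rewrite vars_App, flat_map_app.
  unfold repl. rewrite !flat_map_app, HC, firstn_map, skipn_map, !flat_map_vars_Var.
  rewrite flat_map_vars_xi.
  set (A := flat_map vars ls) in *.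
  set (B1 := firstn (i - 1) (seq N mf)). set (B2 := skipn i (seq N mf)).
  assert (Hsq : seq N mf = B1 ++ (N + (i-1)) :: B2).
  { unfold B1, B2. replace (skipn i (seq N mf)) with (skipn (S (i-1)) (seq N mf))
      by (f_equal; lia). symmetry.
    apply firstn_skipn_middle. rewrite nth_error_seq.
    replace (Nat.ltb (i-1) mf) with true; auto. symmetry; apply Nat.ltb_lt; lia. }
  assert (HB1 : NoDup (B1 ++ B2)).
  { eapply NoDup_remove_1. rewrite <- Hsq. apply seq_NoDup. }
  assert (HB2 : forall x, In x (B1 ++ B2) -> N <= x).
  { intros x Hx. assert (In x (seq N mf)) as Hx'.
    { rewrite Hsq. apply in_app_or in Hx. apply in_or_app. simpl. tauto. }
    apply in_seq in Hx'. lia. }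
  assert (Hp : Permutation (A ++ B1 ++ C ++ B2) ((A ++ C) ++ (B1 ++ B2))).
  { rewrite <- !app_assoc. apply Permutation_app_head.
    rewrite !app_assoc. apply Permutation_app_tail. apply Permutation_app_comm. }
  eapply Permutation_NoDup; [symmetry; exact Hp|].
  apply NoDup_app; auto. intros x Hx Hx'. specialize (HN x Hx). specialize (HB2 x Hx'). lia.
Qed.

End Transformation.

Section XiRuleInstances.
Context {F : Type} (arity : F -> nat) (rules : F -> list (crule F)).
Hypothesis Hs : strong_cctrs arity rules.
Local Notation H := (term (@Hsym F)).
Local Notation X := (xi rules top).
Local Notation cs_step := (cs_step arity rules).

Definition xi_args (sg : nat -> term F) ls := map (fun l => X (subst sg l)) ls.
Definition xi_bs (sg : nat -> term F) (cs : list (term F * term F)) :=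
  map (fun c => X (subst sg (snd c))) cs.
Definition xi_cond (sg : nat -> term F) (cs : list (term F * term F)) j :=
  X (subst sg (fst (nth j cs (Var 0, Var 0)))).

(* [p0] is the 0-based index of [rho] in [rules f]: [rho] is the paper's [ρ_i] with [i = S p0]. *)
Context {f : F} {p0 : nat} {rho : crule F} {ls : list (term F)}.
Hypothesis Hnth : nth_error (rules f) p0 = Some rho.
Hypothesis Hlhs : cr_lhs rho = App f ls.

Let cs := cr_conds rho.
Let V := vars (cr_lhs rho) ++ flat_map vars (rule_bs rho).
Let N := S (list_max V).
Let xs := seq N (m rules f).

(* Instantiates the Ξ(R) rule variables: rule variables by [ξ_⊤ ∘ sg],
   the fresh flag variables [xs] by [⊤]. *)
Definition pattern_subst (sg : nat -> term F) (x : nat) : H :=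
  if Nat.ltb x N then X (sg x) else top.

Lemma rho_in_rules : In rho (rules f).
Proof. eapply nth_error_In; eauto. Qed.

Lemma rule_index_lt : p0 < m rules f.
Proof. unfold m. apply nth_error_Some. rewrite Hnth. discriminate. Qed.

Lemma pattern_subst_xi sg t : incl (vars t) V -> subst (pattern_subst sg) (X t) = X (subst sg t).
Proof.
  intros Hv. rewrite xi_subst. apply subst_ext. intros x Hx. rewrite vars_xi in Hx.
  unfold pattern_subst. replace (Nat.ltb x N) with true; auto. symmetry. apply Nat.ltb_lt.
  assert (Hle : x <= list_max V).
  { pose proof (proj1 (list_max_le V (list_max V)) (le_n _)) as HV.
    rewrite Forall_forall in HV. apply HV, Hv, Hx. }
  unfold N. lia.
Qed.

Lemma pattern_subst_args sg : map (subst (pattern_subst sg)) (map X ls) = xi_args sg ls.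
Proof.
  unfold xi_args. rewrite map_map. apply map_ext_in. intros l Hl. apply pattern_subst_xi.
  intros x Hx. unfold V. apply in_or_app. left. rewrite Hlhs, vars_App, in_flat_map. eauto.
Qed.

Lemma pattern_subst_flags sg : map (subst (pattern_subst sg)) (map Var xs) = repeat top (m rules f).
Proof.
  rewrite map_map. unfold xs. assert (Hg : forall a n, N <= a ->
    map (fun x => subst (pattern_subst sg) (Var x)) (seq a n) = repeat top n).
  2: apply Hg; auto.
  intros a n. revert a.
  induction n; intros a Ha; simpl; auto. f_equal.
  - unfold pattern_subst. replace (Nat.ltb a N) with false; auto. symmetry. apply Nat.ltb_ge. lia.
  - apply IHn. lia.
Qed.

Lemma pattern_subst_bs sg j :
  map (subst (pattern_subst sg)) (firstn j (map (fun c => X (snd c)) cs)) = xi_bs sg (firstn j cs).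
Proof.
  rewrite firstn_map, map_map. unfold xi_bs. apply map_ext_in. intros c Hc. apply pattern_subst_xi.
  intros x Hx. unfold V. apply in_or_app. right. unfold rule_bs. apply in_flat_map.
  exists (snd c). split; auto. apply in_map. apply (in_firstn _ j). exact Hc.
Qed.

Lemma pattern_subst_cond sg j : j < length cs ->
  subst (pattern_subst sg) (X (fst (nth j cs (Var 0, Var 0)))) = xi_cond sg cs j.
Proof.
  intros Hj. apply pattern_subst_xi.
  intros x Hx. apply (incl_vars_prefix _ _ j). apply (strong_rule_cond_vars Hs rho_in_rules); auto.
Qed.

Lemma pattern_subst_rhs sg : subst (pattern_subst sg) (X (cr_rhs rho)) = X (subst sg (cr_rhs rho)).
Proof. apply pattern_subst_xi, (strong_rule_rhs_vars Hs rho_in_rules). Qed.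

Lemma xi_lhs_inst sg : X (subst sg (cr_lhs rho)) = App (HF f) (xi_args sg ls ++ repeat top (m rules f)).
Proof. rewrite Hlhs. simpl. f_equal. unfold xi_args. rewrite map_map. auto. Qed.

Lemma linear_aux_lhs g j :
  linear (App g (map X ls ++ repl (map Var xs) (S p0) (firstn j (map (fun c => X (snd c)) cs)))).
Proof.
  pose proof (strong_rule_vars_NoDup Hs rho_in_rules) as Hnd. pose proof rule_index_lt.
  apply linear_xi_pattern with (C := flat_map vars (firstn j (rule_bs rho))).
  - rewrite <- (vars_App f), <- Hlhs. apply NoDup_vars_prefix. exact Hnd.
  - intros x Hx. rewrite <- (vars_App f), <- Hlhs in Hx. apply (incl_vars_prefix _ _ j) in Hx.
    pose proof (proj1 (list_max_le V (list_max V)) (le_n _)) as HV.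
    rewrite Forall_forall in HV. apply HV in Hx. unfold N. lia.
  - rewrite firstn_map. unfold rule_bs. rewrite firstn_map, !flat_map_concat_map, !map_map.
    f_equal. apply map_ext. intros; apply vars_xi.
  - lia.
Qed.

Lemma linear_top_lhs g : linear (App g (map X ls ++ repl (map Var xs) (S p0) [top])).
Proof.
  pose proof (linear_aux_lhs g 0) as Hl. unfold linear in *. rewrite vars_App in *.
  rewrite !flat_map_app in *. unfold repl in *. rewrite !flat_map_app in *. simpl in *. auto.
Qed.

Ltac xi_rule_intro :=
  exists f, (S p0), rho, ls, xs; split; [lia|]; split; [simpl; rewrite Nat.sub_0_r; auto|];
  split; auto; split; [unfold xs; apply length_seq|]; cbv zeta.

Lemma cs_step_rule1 sg : length cs = 0 ->
  cs_step (X (subst sg (cr_lhs rho))) (X (subst sg (cr_rhs rho))).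
Proof.
  intros Hk. pose proof rule_index_lt. apply csctx_root.
  exists (App (HF f) (map X ls ++ repl (map Var xs) (S p0) [top])), (X (cr_rhs rho)),
    (pattern_subst sg). split; [split|split].
  - apply linear_top_lhs.
  - xi_rule_intro. left. auto.
  - rewrite xi_lhs_inst. simpl. rewrite map_app, pattern_subst_args, map_repl, pattern_subst_flags.
    simpl. rewrite repl_repeat; auto. lia.
  - symmetry. apply pattern_subst_rhs.
Qed.

Lemma cs_step_rule2 sg : 0 < length cs ->
  cs_step (X (subst sg (cr_lhs rho)))
    (App (HAux f (S p0) 1) (xi_args sg ls ++ repl (repeat top (m rules f)) (S p0) [xi_cond sg cs 0])).
Proof.
  intros Hk. pose proof rule_index_lt. apply csctx_root.
  exists (App (HF f) (map X ls ++ repl (map Var xs) (S p0) [top])),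
    (App (HAux f (S p0) 1) (map X ls ++ repl (map Var xs) (S p0) [X (fst (cnth cs 1))])),
    (pattern_subst sg). split; [split|split].
  - apply linear_top_lhs.
  - xi_rule_intro. right; left. auto.
  - rewrite xi_lhs_inst. simpl. rewrite map_app, pattern_subst_args, map_repl, pattern_subst_flags.
    simpl. rewrite repl_repeat; auto. lia.
  - simpl. rewrite map_app, pattern_subst_args, map_repl, pattern_subst_flags. simpl.
    unfold cnth. simpl. rewrite pattern_subst_cond; auto.
Qed.

Lemma cs_step_rule3 sg : 0 < length cs ->
  cs_step (App (HAux f (S p0) (length cs))
             (xi_args sg ls ++ repl (repeat top (m rules f)) (S p0) (xi_bs sg cs)))
    (X (subst sg (cr_rhs rho))).
Proof.
  intros Hk. pose proof rule_index_lt. apply csctx_root.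
  exists (App (HAux f (S p0) (length cs))
      (map X ls ++ repl (map Var xs) (S p0) (firstn (length cs) (map (fun c => X (snd c)) cs)))),
    (X (cr_rhs rho)), (pattern_subst sg). split; [split|split].
  - apply linear_aux_lhs.
  - xi_rule_intro. right; right; left.
    rewrite firstn_all2; [|rewrite length_map; auto]. auto.
  - simpl. rewrite map_app, pattern_subst_args, map_repl, pattern_subst_flags, pattern_subst_bs, firstn_all.
    auto.
  - symmetry. apply pattern_subst_rhs.
Qed.

Lemma cs_step_rule4 sg j : 1 <= j < length cs ->
  cs_step (App (HAux f (S p0) j)
             (xi_args sg ls ++ repl (repeat top (m rules f)) (S p0) (xi_bs sg (firstn j cs))))
    (App (HAux f (S p0) (S j))
       (xi_args sg ls ++ repl (repeat top (m rules f)) (S p0) (xi_bs sg (firstn j cs) ++ [xi_cond sg cs j]))).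
Proof.
  intros Hk. pose proof rule_index_lt. apply csctx_root.
  exists (App (HAux f (S p0) j)
      (map X ls ++ repl (map Var xs) (S p0) (firstn j (map (fun c => X (snd c)) cs)))),
    (App (HAux f (S p0) (S j)) (map X ls ++ repl (map Var xs) (S p0)
       (firstn j (map (fun c => X (snd c)) cs) ++ [X (fst (cnth cs (S j)))]))),
    (pattern_subst sg). split; [split|split].
  - apply linear_aux_lhs.
  - xi_rule_intro. right; right; right; left. exists j. auto.
  - simpl. rewrite map_app, pattern_subst_args, map_repl, pattern_subst_flags, pattern_subst_bs. auto.
  - simpl. rewrite map_app, pattern_subst_args, map_repl, pattern_subst_flags, map_app, pattern_subst_bs.
    simpl. unfold cnth. simpl. rewrite Nat.sub_0_r, pattern_subst_cond; auto. lia.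
Qed.

End XiRuleInstances.

Section ConditionEvaluation.
Context {F : Type} (arity : F -> nat) (rules : F -> list (crule F)).
Hypothesis Hs : strong_cctrs arity rules.
Local Notation X := (xi rules top).
Local Notation wf := (wf arity).
Local Notation cs_step := (cs_step arity rules).

Context {f : F} {p0 : nat} {rho : crule F} {ls : list (term F)}.
Hypothesis Hnth : nth_error (rules f) p0 = Some rho.
Hypothesis Hlhs : cr_lhs rho = App f ls.
(* [Rc] is the relation in which the conditions hold; it must preserve
   well-formedness and be simulated by Ξ(R). *)
Variable Rc : term F -> term F -> Prop.
Hypothesis HRc : forall a b, Rc a b -> wf a -> wf b /\ clos_refl_trans _ cs_step (X a) (X b).
Variable sg : nat -> term F.
Hypothesis Hwl : wf (subst sg (cr_lhs rho)).

Local Notation cs := (cr_conds rho).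
Local Notation d := (@Var F 0, @Var F 0).
Local Notation flags := (repeat top (m rules f)).

Definition cond_holds j := Rc (subst sg (fst (nth j cs d))) (subst sg (snd (nth j cs d))).

Lemma wf_cond_inst_vars j : j <= length cs -> (forall q, q < j -> cond_holds q) ->
  forall x, In x (vars (cr_lhs rho) ++ flat_map vars (firstn j (rule_bs rho))) -> wf (sg x).
Proof.
  pose proof (rho_in_rules _ Hnth) as Hin.
  induction j; intros Hj Hc x Hx.
  - simpl in Hx. rewrite app_nil_r in Hx. eapply term_all_subst_var; eauto.
  - unfold rule_bs in *. rewrite (firstn_succ_nth _ (Var 0)) in Hx by (rewrite length_map; auto).
    rewrite flat_map_app, app_assoc in Hx. apply in_app_or in Hx. destruct Hx as [Hx|Hx].
    + apply IHj; auto. lia.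
    + simpl in Hx. rewrite app_nil_r in Hx.
      rewrite (nth_indep _ _ (snd d)) in Hx by (rewrite length_map; lia).
      rewrite map_nth in Hx.
      assert (Hwa : wf (subst sg (fst (nth j cs d)))).
      { apply term_all_subst.
        - apply (strong_rule_wf_cond Hs Hin). apply nth_In. lia.
        - intros y Hy. apply IHj; auto. lia. apply (strong_rule_cond_vars Hs Hin); auto. }
      destruct (HRc (Hc j (Nat.lt_succ_diag_r j)) Hwa) as [Hwb _].
      eapply term_all_subst_var; eauto.
Qed.

Lemma wf_cond_inst j : j < length cs -> (forall q, q < j -> cond_holds q) ->
  wf (subst sg (fst (nth j cs d))).
Proof.
  intros Hj Hc. pose proof (rho_in_rules _ Hnth) as Hin. apply term_all_subst.
  - apply (strong_rule_wf_cond Hs Hin). apply nth_In. lia.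
  - intros y Hy. apply (wf_cond_inst_vars (j:=j)); [lia|auto|].
    apply (strong_rule_cond_vars Hs Hin); auto.
Qed.

Lemma length_lhs_args : length ls = arity f.
Proof.
  rewrite Hlhs in Hwl. simpl in Hwl. unfold wf in Hwl. apply term_all_App in Hwl.
  rewrite length_map in Hwl. apply Hwl.
Qed.

(* [f_i^j(l⃗σ, …, b_1σ, …, b_{j-1}σ, w, …)] with [i = S p0], [j = S j']. *)
Definition aux_term j' w := App (HAux f (S p0) (S j'))
  (xi_args rules sg ls ++ repl flags (S p0) (xi_bs rules sg (firstn j' cs) ++ [w])).

Lemma aux_term_active j' w : j' <= length cs ->
  aux_term j' w = App (HAux f (S p0) (S j'))
    ((xi_args rules sg ls ++ firstn p0 flags ++ xi_bs rules sg (firstn j' cs)) ++ w :: skipn (S p0) flags) /\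
  mu arity (HAux f (S p0) (S j'))
    (S (length (xi_args rules sg ls ++ firstn p0 flags ++ xi_bs rules sg (firstn j' cs)))) = true.
Proof.
  intros Hj. pose proof (rule_index_lt _ Hnth). split.
  - unfold aux_term, repl. simpl. rewrite Nat.sub_0_r, <- !app_assoc. reflexivity.
  - unfold mu. apply Nat.eqb_eq. unfold xi_args, xi_bs.
    rewrite !length_app, !length_map, length_firstn, repeat_length, length_firstn, length_lhs_args.
    lia.
Qed.

Lemma cs_eval_cond j : j < length cs -> (forall q, q <= j -> cond_holds q) ->
  clos_refl_trans _ cs_step (aux_term j (xi_cond rules sg cs j))
    (App (HAux f (S p0) (S j))
       (xi_args rules sg ls ++ repl flags (S p0) (xi_bs rules sg (firstn (S j) cs)))).
Proof.
  intros Hj Hc.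
  assert (Hwa : wf (subst sg (fst (nth j cs d))))
    by (apply wf_cond_inst; [lia|intros q Hq; apply Hc; lia]).
  destruct (HRc (Hc j (le_n j)) Hwa) as [_ Hr].
  destruct (aux_term_active (j':=j) (xi_cond rules sg cs j)) as [E1 Hm]; [lia|].
  rewrite E1, (firstn_succ_nth _ d) by lia. unfold xi_bs at 2. rewrite map_app.
  destruct (aux_term_active (j':=j) (X (subst sg (snd (nth j cs d))))) as [E2 _]; [lia|].
  unfold aux_term, xi_bs in E2. simpl map. rewrite E2. apply cs_rt_arg; auto.
Qed.

Lemma cs_reaches_cond j : j < length cs -> (forall q, q < j -> cond_holds q) ->
  clos_trans _ cs_step (X (subst sg (cr_lhs rho))) (aux_term j (xi_cond rules sg cs j)).
Proof.
  induction j; intros Hj Hc.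
  - apply t_step. apply cs_step_rule2; auto.
  - eapply t_trans; [apply IHj; [lia|intros q Hq; apply Hc; lia]|].
    eapply clos_rt_t; [apply cs_eval_cond; [lia|intros q Hq; apply Hc; lia]|].
    apply t_step. apply cs_step_rule4; auto. lia.
Qed.

Lemma cs_simulates_rule : (forall q, q < length cs -> cond_holds q) ->
  clos_trans _ cs_step (X (subst sg (cr_lhs rho))) (X (subst sg (cr_rhs rho))).
Proof.
  intros Hc. destruct (length cs) as [|k] eqn:Ek.
  - apply t_step. eapply cs_step_rule1; eauto.
  - eapply t_trans; [apply (cs_reaches_cond (j:=k)); [lia|intros q Hq; apply Hc; lia]|].
    eapply clos_rt_t; [apply cs_eval_cond; [lia|intros q Hq; apply Hc; lia]|].
    rewrite <- Ek, firstn_all. apply t_step, cs_step_rule3; auto. lia.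
Qed.

Lemma cs_reaches_active_cond j : j < length cs -> (forall q, q < j -> cond_holds q) ->
  exists T, clos_trans _ cs_step (X (subst sg (cr_lhs rho))) T /\
    active_ctx arity (X (subst sg (fst (nth j cs d)))) T.
Proof.
  intros Hj Hc. exists (aux_term j (xi_cond rules sg cs j)). split. apply cs_reaches_cond; auto.
  destruct (aux_term_active (j':=j) (xi_cond rules sg cs j)) as [E1 Hm]; [lia|].
  rewrite E1. apply active_arg; auto. constructor.
Qed.

End ConditionEvaluation.

Section Simulation.
Context {F : Type} (arity : F -> nat) (rules : F -> list (crule F)).
Hypothesis Hs : strong_cctrs arity rules.
Local Notation X := (xi rules top).
Local Notation wf := (wf arity).
Local Notation cs_step := (cs_step arity rules).

Lemma wf_arg f ss1 s ss2 : wf (App f (ss1 ++ s :: ss2)) -> wf s.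
Proof.
  unfold wf. intros Hw. apply term_all_App in Hw. destruct Hw as [_ Hw].
  rewrite Forall_forall in Hw. apply Hw. apply in_or_app; simpl; auto.
Qed.

Lemma wf_replace_arg f ss1 s t ss2 : wf (App f (ss1 ++ s :: ss2)) -> wf t ->
  wf (App f (ss1 ++ t :: ss2)).
Proof.
  unfold wf. intros Hw Ht. apply term_all_App in Hw. destruct Hw as [Hl Hw].
  apply term_all_App. rewrite length_app in *. simpl in *. split; auto.
  rewrite Forall_app in *. destruct Hw as [H1 H2]. inversion H2; subst. split; auto.
Qed.

Lemma root_rel_simulation (Rc : term F -> term F -> Prop) u v :
  (forall a b, Rc a b -> wf a -> wf b /\ clos_refl_trans _ cs_step (X a) (X b)) ->
  root_rel rules Rc u v -> wf u -> wf v /\ clos_trans _ cs_step (X u) (X v).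
Proof.
  intros HRc [rho [sg [[f Hin] [-> [-> Hc]]]]] Hwu.
  destruct (In_nth_error _ _ Hin) as [p0 Hnth].
  destruct (strong_rule_lhs Hs Hin) as [ls Hlhs].
  assert (Hcq : forall q, q < length (cr_conds rho) -> cond_holds (rho:=rho) Rc sg q).
  { intros q Hq. unfold cond_holds. rewrite Forall_forall in Hc. apply Hc. apply nth_In; auto. }
  split.
  - apply term_all_subst; [apply (strong_rule_wf_rhs Hs Hin)|]. intros x Hx.
    apply (wf_cond_inst_vars Hs Hnth _ HRc _ Hwu (j := length (cr_conds rho))); auto.
    unfold rule_bs. rewrite firstn_all2; [|rewrite length_map; auto].
    apply (strong_rule_rhs_vars Hs Hin); auto.
  - eapply cs_simulates_rule; eauto.
Qed.

Lemma approx_simulation n : forall u v, approx rules n u v -> wf u ->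
  wf v /\ clos_trans _ cs_step (X u) (X v).
Proof.
  induction n; intros u v Ha Hw; [destruct Ha|].
  change (ctx (root_rel rules (clos_refl_trans _ (approx rules n))) u v) in Ha.
  induction Ha as [u v Hr|f ss1 s t ss2 Hc IHc].
  - eapply root_rel_simulation; eauto. intros a b Hab. induction Hab as [a b Hab| |]; intros Hwa.
    + destruct (IHn _ _ Hab Hwa). split; auto. apply clos_t_clos_rt; auto.
    + split; auto. apply rt_refl.
    + destruct (IHHab1 Hwa) as [Hy Hxy]. destruct (IHHab2 Hy) as [Hz Hyz].
      split; auto. eapply rt_trans; eauto.
  - destruct (IHc (wf_arg _ _ _ Hw)) as [Hwt Hct]. split. eapply wf_replace_arg; eauto.
    simpl. rewrite !map_app. simpl. rewrite <- !app_assoc. simpl.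
    apply cs_ct_arg; auto. rewrite length_map. apply mu_HF_arg.
    unfold wf in Hw. apply term_all_App in Hw. rewrite length_app in Hw. simpl in Hw. lia.
Qed.

Lemma step_simulation u v : step rules u v -> wf u -> wf v /\ clos_trans _ cs_step (X u) (X v).
Proof. intros [n Hn]. eapply approx_simulation; eauto. Qed.

Lemma rt_step_simulation a b : clos_refl_trans _ (step rules) a b -> wf a ->
  wf b /\ clos_refl_trans _ cs_step (X a) (X b).
Proof.
  induction 1 as [a b Hab| |]; intros Hwa.
  + destruct (step_simulation Hab Hwa). split; auto. apply clos_t_clos_rt; auto.
  + split; auto. apply rt_refl.
  + destruct (IHclos_refl_trans1 Hwa) as [Hy Hxy]. destruct (IHclos_refl_trans2 Hy) as [Hz Hyz].
    split; auto. eapply rt_trans; eauto.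
Qed.

Lemma sqsup_simulation u v : sqsup rules u v -> wf u ->
  wf v /\ exists T, clos_trans _ cs_step (X u) T /\ active_ctx arity (X v) T.
Proof.
  intros [w [rho [sg [i [Hsub [[f Hin] [-> [Hi [Hc ->]]]]]]]]] Hwu.
  destruct (In_nth_error _ _ Hin) as [p0 Hnth].
  destruct (strong_rule_lhs Hs Hin) as [ls Hlhs].
  assert (Hww : wf (subst sg (cr_lhs rho))) by (eapply term_all_subterm; eauto).
  assert (Hcq : forall q, q < i -> cond_holds (rho:=rho) (clos_refl_trans _ (step rules)) sg q)
    by (intros q Hq; apply Hc; auto).
  split.
  - eapply wf_cond_inst; eauto. intros; apply rt_step_simulation; auto.
  - destruct (cs_reaches_active_cond Hs Hnth Hlhs _ (fun a b Hab Hwa => rt_step_simulation Hab Hwa) _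
      Hww Hi Hcq) as [T0 [H1 H2]].
    destruct (active_ctx_ct (xi_subterm_active arity rules Hwu Hsub) H1) as [T [H3 H4]].
    exists T. split; auto. eapply active_ctx_trans; eauto.
Qed.

Fixpoint label_all (t : term F) : term (@Gsym F) :=
  match t with
  | Var x => Var x
  | App f ts =>
      App (match rules f with [] => GC f | _ => GD f (repeat true (m rules f)) end)
        (map label_all ts)
  end.

Lemma zeta_label_all t : zeta (label_all t) = X t.
Proof.
  induction t using term_ind_in; simpl; auto.
  unfold m. destruct (rules f) eqn:E; simpl.
  - rewrite app_nil_r, map_map. f_equal. apply map_ext_in; auto.
  - rewrite map_map. f_equal. f_equal. apply map_ext_in; auto.
    rewrite map_repeat. auto.
Qed.

Lemma wfG_label_all t : wf t -> wfG arity rules (label_all t).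
Proof.
  induction t using term_ind_in; intros Hw; simpl; auto.
  unfold wf in Hw. apply term_all_App in Hw. destruct Hw as [Hl Hw].
  unfold wfG. apply term_all_App. rewrite length_map. split.
  - unfold is_constructor, m. destruct (rules f) eqn:E; simpl; auto.
    rewrite E. split; [discriminate|]. split; auto. rewrite repeat_length. auto.
  - rewrite Forall_forall in *. intros u Hu. apply in_map_iff in Hu. destruct Hu as [t [<- Ht]].
    apply H; auto. apply Hw; auto.
Qed.

Lemma no_qd_chain_below T : Acc (fun a b => clos_trans _ cs_step b a) T ->
  forall u : nat -> term F, (forall k, step rules (u k) (u (S k)) \/ sqsup rules (u k) (u (S k))) ->
  wf (u 0) -> active_ctx arity (X (u 0)) T -> False.
Proof.
  induction 1 as [T _ IH]. intros u Hu Hw Ha.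
  destruct (Hu 0) as [Hst|Hsq].
  - destruct (step_simulation Hst Hw) as [Hw1 Hc].
    destruct (active_ctx_ct Ha Hc) as [T' [H1 H2]].
    apply (IH T' H2 (fun k => u (S k))); auto.
  - destruct (sqsup_simulation Hsq Hw) as [Hw1 [T0 [Hc Ha0]]].
    destruct (active_ctx_ct Ha Hc) as [T' [H1 H2]].
    apply (IH T' H2 (fun k => u (S k))); auto. simpl. eapply active_ctx_trans; eauto.
Qed.

Theorem quasi_decreasing_of_cs_terminating :
  cs_terminating_on arity rules (fun t => exists s, wfG arity rules s /\ t = zeta s) ->
  quasi_decreasing arity rules.
Proof.
  intros Hcs s Hws [u [Hu0 Hu]].
  assert (HA : Acc (fun a b => cs_step b a) (X s)).
  { apply Acc_of_no_chain, Hcs. exists (label_all s). split.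
    - apply wfG_label_all; auto.
    - symmetry; apply zeta_label_all. }
  apply Acc_clos_trans_flip in HA.
  apply (no_qd_chain_below HA u Hu); subst; auto. constructor.
Qed.

End Simulation.

Section Erasure.
Context {F : Type} (arity : F -> nat) (rules : F -> list (crule F)).
Local Notation H := (term (@Hsym F)).
Local Notation X := (xi rules top).
Local Notation wf := (wf arity).
Local Notation d := (@Var F 0, @Var F 0).

(* Keeps the first [arity f] arguments of [f] and [f_i^j].  The junk value
   for [⊥]/[⊤] is irrelevant: they only occur at erased flag positions. *)
Fixpoint erase (t : H) : term F :=
  match t with
  | Var x => Var x
  | App g ts =>
      match g with
      | HF f => App f (firstn (arity f) (map erase ts))
      | HAux f _ _ => App f (firstn (arity f) (map erase ts))
      | _ => Var 0
      end
  end.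

Lemma erase_HF f Lh rest : length Lh = arity f ->
  erase (App (HF f) (Lh ++ rest)) = App f (map erase Lh).
Proof. intros Hl. simpl. rewrite map_app, firstn_app_exact; auto. rewrite length_map; auto. Qed.

Lemma erase_Aux f i j Lh rest : length Lh = arity f ->
  erase (App (HAux f i j) (Lh ++ rest)) = App f (map erase Lh).
Proof. intros Hl. simpl. rewrite map_app, firstn_app_exact; auto. rewrite length_map; auto. Qed.

Lemma erase_subst_xi (tau : nat -> H) r : wf r ->
  erase (subst tau (X r)) = subst (fun x => erase (tau x)) r.
Proof.
  induction r using term_ind_in; intros Hw; simpl; auto.
  unfold wf in Hw. apply term_all_App in Hw. destruct Hw as [Hl Hw].
  rewrite map_app, map_map, map_app, firstn_app_exact.
  2: rewrite !length_map; auto.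
  f_equal. rewrite map_map. apply map_ext_in. intros a Ha. apply H; auto.
  rewrite Forall_forall in Hw; apply Hw; auto.
Qed.

Lemma erase_subst_xi_args (tau : nat -> H) ls : Forall wf ls ->
  map erase (map (subst tau) (map X ls)) = map (subst (fun x => erase (tau x))) ls.
Proof.
  intros Hw. rewrite !map_map. apply map_ext_in. intros a Ha. apply erase_subst_xi.
  rewrite Forall_forall in Hw; auto.
Qed.

Definition cond_count (f : F) (i : nat) : nat :=
  match nth_error (rules f) (i - 1) with Some rho => length (cr_conds rho) | None => 0 end.

(* [f_i^j(Lh, …, c_1, …, c_j, …)] faithfully records the evaluation of the
   conditions of [ρ_i]: [erase Lh = l⃗θ], [erase c_p = b_pθ] for [p < j] and
   [a_pθ ->* erase c_p] for [p ≤ j], counting conditions from 1 (whereas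
   [nth] counts from 0). *)
Definition aux_sound (f : F) (i j : nat) (args : list H) : Prop :=
  exists rho ls th Lh Xl cs',
    nth_error (rules f) (i - 1) = Some rho /\ 1 <= i /\ cr_lhs rho = App f ls /\
    1 <= j <= length (cr_conds rho) /\
    args = Lh ++ repl Xl i cs' /\ length Lh = arity f /\ length Xl = m rules f /\
    length cs' = j /\
    map erase Lh = map (subst th) ls /\
    (forall p, p < j - 1 -> erase (nth p cs' (Var 0)) = subst th (snd (nth p (cr_conds rho) d))) /\
    (forall p, p < j -> clos_refl_trans _ (step rules)
        (subst th (fst (nth p (cr_conds rho) d))) (erase (nth p cs' (Var 0)))).

Definition aux_sound_at (u : H) : Prop :=
  match u with App (HAux f i j) args => aux_sound f i j args | _ => True end.

Definition aux_invariant (t : H) : Prop := forall u, subterm_eq u t -> aux_sound_at u.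

Lemma aux_invariant_subterm t u : aux_invariant t -> subterm_eq u t -> aux_invariant u.
Proof. intros Ht Hu v Hv. apply Ht. eapply subterm_trans; eauto. Qed.

Lemma aux_invariant_arg g args a : aux_invariant (App g args) -> In a args -> aux_invariant a.
Proof. intros Ht Ha. eapply aux_invariant_subterm; [exact Ht|]. apply subterm_arg; auto. Qed.

Lemma aux_invariant_App g args :
  aux_invariant (App g args) <-> aux_sound_at (App g args) /\ forall a, In a args -> aux_invariant a.
Proof.
  split.
  - intros Hi. split; [apply Hi; constructor|]. intros a Ha. eapply aux_invariant_arg; eauto.
  - intros [H1 H2] u Hu. inversion Hu; subst; auto. apply (H2 t); auto.
Qed.

Definition aux_free (p : H) : Prop :=
  term_all (fun g _ => match g with HAux _ _ _ => False | _ => True end) p.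

Lemma aux_free_App g (ps : list H) : (match g with HAux _ _ _ => False | _ => True end) ->
  Forall aux_free ps -> aux_free (App g ps).
Proof. intros Hg Hp. unfold aux_free. apply term_all_App. split; auto. Qed.

Lemma aux_invariant_subst (tau : nat -> H) p :
  aux_free p -> (forall x, In x (vars p) -> aux_invariant (tau x)) -> aux_invariant (subst tau p).
Proof.
  induction p using term_ind_in; intros Hn Hx.
  - apply Hx. simpl; auto.
  - unfold aux_free in Hn. apply term_all_App in Hn. destruct Hn as [Hg Hn].
    simpl. apply aux_invariant_App. split.
    + destruct f; simpl; auto. destruct Hg.
    + intros a Ha. apply in_map_iff in Ha. destruct Ha as [q [<- Hq]]. apply H; auto.
      rewrite Forall_forall in Hn; apply Hn; auto.
      intros x Hxq. apply Hx. rewrite vars_App, in_flat_map. eauto.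
Qed.

Lemma aux_free_invariant p : aux_free p -> aux_invariant p.
Proof.
  intros Hn. rewrite <- (subst_Var p). apply aux_invariant_subst; auto.
  intros x _ u Hu. inversion Hu; simpl; auto.
Qed.

Lemma aux_free_xi r : aux_free (X r).
Proof.
  induction r using term_ind_in; [unfold aux_free; simpl; auto|]. simpl.
  apply aux_free_App; [exact I|]. apply Forall_app. split.
  - rewrite Forall_forall. intros a Ha. apply in_map_iff in Ha. destruct Ha as [q [<- Hq]]. apply H; auto.
  - rewrite Forall_forall. intros a Ha. apply repeat_spec in Ha. subst. repeat split.
Qed.

Lemma aux_invariant_rhs (tau : nat -> H) l p :
  aux_invariant (subst tau l) -> aux_free p -> incl (vars p) (vars l) -> aux_invariant (subst tau p).
Proof.
  intros Hl Hn Hinc. apply aux_invariant_subst; auto. intros x Hx.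
  eapply aux_invariant_subterm; eauto. apply subterm_subst_var. apply Hinc; auto.
Qed.

Definition is_top (t : H) : bool := match t with App HTop [] => true | _ => false end.

Definition count_top (l : list H) : nat := length (filter is_top l).

Lemma count_top_app l1 l2 : count_top (l1 ++ l2) = count_top l1 + count_top l2.
Proof. unfold count_top. rewrite filter_app, length_app. auto. Qed.

(* Ordered lexicographically: the number of [⊤] flags, then the number of
   conditions of [ρ_i] still to be evaluated at [f_i^j]. *)
Definition progress_measure (t : H) : nat * nat :=
  match t with
  | App (HF f) args => (count_top (skipn (arity f) args), 0)
  | App (HAux f i j) args =>
      (count_top (firstn (i-1) (skipn (arity f) args)) + count_top (skipn (i-1+j) (skipn (arity f) args)),
       cond_count f i - j + 1)
  | _ => (0, 0)
  end.

Definition lex_lt (a b : nat * nat) : Prop := fst a < fst b \/ (fst a = fst b /\ snd a < snd b).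

Lemma lex_lt_wf : well_founded lex_lt.
Proof.
  intros [a b]. revert b. induction a as [a IHa] using lt_wf_ind. intros b.
  induction b as [b IHb] using lt_wf_ind. constructor. intros [a' b'] [H1|[H1 H2]]; simpl in *.
  - apply IHa; auto.
  - subst. apply IHb; auto.
Qed.

Lemma progress_measure_Aux f i j Lh Xl cs' : length Lh = arity f -> 1 <= i <= length Xl -> length cs' = j ->
  progress_measure (App (HAux f i j) (Lh ++ repl Xl i cs')) =
  (count_top (firstn (i-1) Xl) + count_top (skipn i Xl), cond_count f i - j + 1).
Proof.
  intros Hl Hi Hj. unfold progress_measure. rewrite (skipn_app_repl _ _ _ i Hl).
  rewrite firstn_app_exact by (rewrite length_firstn; lia).
  rewrite skipn_app, length_firstn, skipn_all2 by (rewrite length_firstn; lia).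
  simpl. rewrite skipn_app, Hj. replace (i - 1 + j - (Nat.min (i-1) (length Xl)) - j) with 0 by lia.
  rewrite skipn_all2 by lia. simpl. reflexivity.
Qed.

Lemma progress_measure_HF f Lh Xl cs' i : length Lh = arity f -> 1 <= i <= length Xl ->
  progress_measure (App (HF f) (Lh ++ repl Xl i cs')) =
  (count_top (firstn (i-1) Xl) + count_top cs' + count_top (skipn i Xl), 0).
Proof.
  intros Hl Hi. unfold progress_measure. rewrite (skipn_app_repl _ _ _ i Hl), !count_top_app.
  f_equal. lia.
Qed.

End Erasure.

Section ErasurePatterns.
Context {F : Type} (arity : F -> nat) (rules : F -> list (crule F)).
Hypothesis Hs : strong_cctrs arity rules.
Local Notation H := (term (@Hsym F)).
Local Notation X := (xi rules top).
Local Notation d := (@Var F 0, @Var F 0).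
Local Notation erase := (erase arity).
Local Notation aux_invariant := (aux_invariant arity rules).
Local Notation aux_sound := (aux_sound arity rules).

Lemma subst_App_repl (tau : nat -> H) g A B i us :
  subst tau (App g (A ++ repl B i us)) =
  App g (map (subst tau) A ++ repl (map (subst tau) B) i (map (subst tau) us)).
Proof. simpl. rewrite map_app, map_repl. auto. Qed.

Lemma vars_App_repl g (A B us : list H) i :
  vars (App g (A ++ repl B i us)) =
  flat_map vars A ++ flat_map vars (firstn (i-1) B) ++ flat_map vars us ++ flat_map vars (skipn i B).
Proof. rewrite vars_App. unfold repl. rewrite !flat_map_app. auto. Qed.

Lemma aux_free_Vars (xs : list nat) : Forall aux_free (map (@Var (@Hsym F)) xs).
Proof. rewrite Forall_forall. intros a Ha. apply in_map_iff in Ha. destruct Ha as [x [<- _]]. exact I. Qed.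

Lemma aux_free_bots n : Forall aux_free (repeat (@bot F) n).
Proof. rewrite Forall_forall. intros a Ha. apply repeat_spec in Ha. subst. repeat split. Qed.

Lemma aux_free_const (g : @Hsym F) : (g = HBot \/ g = HTop) -> aux_free (App g []).
Proof. intros [-> | ->]; repeat split. Qed.

Lemma aux_free_xi_list (ls : list (term F)) : Forall aux_free (map X ls).
Proof.
  rewrite Forall_forall. intros a Ha. apply in_map_iff in Ha. destruct Ha as [q [<- _]].
  apply (aux_free_xi rules).
Qed.

Lemma AP_aux_free t v : AP arity rules t v -> aux_free v.
Proof.
  induction 1; apply aux_free_App; simpl; auto.
  - apply aux_free_Vars.
  - apply Forall_app; split; [apply aux_free_Vars|apply aux_free_bots].
  - apply Forall_app; split; [apply aux_free_Vars|constructor; auto; apply aux_free_Vars].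
Qed.

Lemma flat_map_vars_xi_bs (cs : list (term F * term F)) j :
  flat_map vars (firstn j (map (fun c => X (snd c)) cs)) = flat_map vars (firstn j (map snd cs)).
Proof. rewrite !firstn_map, <- (flat_map_vars_xi rules), map_map. auto. Qed.

Lemma nth_map_lt {A B} (g : A -> B) l p da db : p < length l -> nth p (map g l) db = g (nth p l da).
Proof. intros Hp. rewrite (nth_indep _ _ (g da)) by (rewrite length_map; auto). apply map_nth. Qed.

Lemma aux_invariant_pattern_args (tau : nat -> H) l (g : F) (ps : list H) :
  aux_invariant (subst tau l) -> Forall aux_free ps -> incl (flat_map vars ps) (vars l) ->
  forall a, In a (map (subst tau) ps) -> aux_invariant a.
Proof.
  intros Hl Hn Hinc. assert (Hi : aux_invariant (subst tau (App (HF g) ps))).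
  { apply (aux_invariant_rhs (rules:=rules)) with l; auto. apply aux_free_App; simpl; auto. }
  simpl in Hi. apply aux_invariant_App in Hi. apply Hi.
Qed.

Lemma aux_sound_inv f i j rho ls Lh Xl cs0 :
  nth_error (rules f) (i - 1) = Some rho -> cr_lhs rho = App f ls ->
  length Lh = arity f -> length Xl = m rules f -> 1 <= i <= m rules f -> length cs0 = j ->
  aux_sound f i j (Lh ++ repl Xl i cs0) ->
  exists th', map erase Lh = map (subst th') ls /\
    (forall p, p < j - 1 -> erase (nth p cs0 (Var 0)) = subst th' (snd (nth p (cr_conds rho) d))) /\
    (forall p, p < j -> clos_refl_trans _ (step rules)
        (subst th' (fst (nth p (cr_conds rho) d))) (erase (nth p cs0 (Var 0)))).
Proof.
  intros Hn Hl HLh HXl Hi Hj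
    [rho' [ls' [th [Lh' [Xl' [cs' [Hn' [_ [Hl' [_ [E [HLh' [HXl' [Hj' [HL [Hfr Hc]]]]]]]]]]]]]]]].
  rewrite Hn in Hn'. injection Hn' as <-. rewrite Hl in Hl'. injection Hl' as <-.
  destruct (app_inj_length _ _ _ _ (eq_trans HLh (eq_sym HLh')) E) as [<- E2].
  unfold repl in E2.
  assert (El : length (firstn (i-1) Xl) = length (firstn (i-1) Xl')) by (rewrite !length_firstn; lia).
  destruct (app_inj_length _ _ _ _ El E2) as [_ E3].
  assert (El2 : length cs0 = length cs') by lia.
  destruct (app_inj_length _ _ _ _ El2 E3) as [<- _].
  exists th. auto.
Qed.

(* By the variable condition on [a_p], its instance only depends on [l] and
   [b_1, …, b_{p-1}]. *)
Lemma subst_cond_agree rho f ls (th th' : nat -> term F) p :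
  In rho (rules f) -> cr_lhs rho = App f ls ->
  (forall x, In x (vars (cr_lhs rho)) -> th' x = th x) ->
  (forall q, q < p -> subst th' (snd (nth q (cr_conds rho) d)) = subst th (snd (nth q (cr_conds rho) d))) ->
  p < length (cr_conds rho) ->
  subst th' (fst (nth p (cr_conds rho) d)) = subst th (fst (nth p (cr_conds rho) d)).
Proof.
  intros Hin Hl Hx Hq Hp.
  apply subst_ext. intros x Hxa. apply (strong_rule_cond_vars Hs Hin) in Hxa; auto.
  apply in_app_or in Hxa. destruct Hxa as [Hxa|Hxa]; auto.
  apply in_flat_map in Hxa. destruct Hxa as [b [Hb Hxb]].
  apply (In_nth _ _ (Var 0)) in Hb. destruct Hb as [q [Hq1 Hq2]].
  rewrite length_firstn in Hq1. rewrite nth_firstn in Hq2.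
  replace (q <? p) with true in Hq2 by (symmetry; apply Nat.ltb_lt; lia).
  unfold rule_bs in Hq1, Hq2. rewrite length_map in Hq1.
  rewrite (@nth_map_lt _ _ snd (cr_conds rho) q d (Var 0)) in Hq2 by lia.
  subst b. eapply subst_inj_vars; [apply Hq|]; eauto. lia.
Qed.

End ErasurePatterns.

Definition root_progress {F} (arity : F -> nat) (rules : F -> list (crule F)) (t t2 : term (@Hsym F)) :=
  step rules (erase arity t) (erase arity t2) \/
  (erase arity t2 = erase arity t /\ lex_lt (progress_measure arity rules t2) (progress_measure arity rules t)).

Section RootSteps.
Context {F : Type} (arity : F -> nat) (rules : F -> list (crule F)).
Hypothesis Hs : strong_cctrs arity rules.
Local Notation H := (term (@Hsym F)).
Local Notation X := (xi rules top).
Local Notation wf := (wf arity).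
Local Notation d := (@Var F 0, @Var F 0).
Local Notation erase := (erase arity).
Local Notation aux_invariant := (aux_invariant arity rules).
Local Notation aux_sound := (aux_sound arity rules).
Local Notation root_progress := (root_progress arity rules).

Ltac in_app_split H := repeat (apply in_app_or in H; destruct H as [H|H]).
Ltac in_app_find :=
  solve [repeat (first [assumption | apply in_or_app; left; assumption | apply in_or_app; right])].

(* An instance [subst tau] of a rule of Ξ(R) generated from [ρ_i] of [R|f]. *)
Context {tau : nat -> H} {f : F} {i : nat} {rho : crule F} {ls : list (term F)} {xs : list nat}.
Hypothesis Hi : 1 <= i.
Hypothesis Hnth : nth_error (rules f) (i - 1) = Some rho.
Hypothesis Hlhs : cr_lhs rho = App f ls.
Hypothesis Hxs : length xs = m rules f.

Local Notation cs := (cr_conds rho).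
Local Notation L := (map X ls).
Local Notation Xv := (map (@Var (@Hsym F)) xs).
Local Notation B := (map (fun c => X (snd c)) cs).
Let th := fun x => erase (tau x).

Lemma root_rule_in : In rho (rules f).
Proof. eapply nth_error_In; eauto. Qed.

Lemma root_index_range : 1 <= i <= m rules f.
Proof.
  assert (i - 1 < m rules f) by (unfold m; apply nth_error_Some; rewrite Hnth; discriminate). lia.
Qed.

Lemma root_lhs_args : length ls = arity f /\ Forall wf ls.
Proof.
  pose proof (strong_rule_wf_lhs Hs root_rule_in) as Hwl.
  rewrite Hlhs in Hwl. unfold wf in Hwl. apply term_all_App in Hwl. exact Hwl.
Qed.

Lemma root_erase_args : map erase (map (subst tau) L) = map (subst th) ls.
Proof. apply erase_subst_xi_args, root_lhs_args. Qed.

Lemma root_length_args : length (map (subst tau) L) = arity f.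
Proof. rewrite !length_map. apply root_lhs_args. Qed.

Lemma root_length_flags : length (map (subst tau) Xv) = m rules f.
Proof. rewrite !length_map. auto. Qed.

Lemma root_wf_cond p : p < length cs -> wf (fst (nth p cs d)) /\ wf (snd (nth p cs d)).
Proof. intros Hp. apply (strong_rule_wf_cond Hs root_rule_in). apply nth_In; auto. Qed.

Lemma root_erase_lhs rest :
  erase (App (HF f) (map (subst tau) L ++ rest)) = subst th (cr_lhs rho).
Proof. rewrite erase_HF by apply root_length_args. rewrite root_erase_args, Hlhs. reflexivity. Qed.

Lemma root_erase_bs j p : p < j <= length cs ->
  erase (nth p (map (subst tau) (firstn j B)) (Var 0)) = subst th (snd (nth p cs d)).
Proof.
  intros Hp.
  rewrite (@nth_map_lt _ _ (subst tau) _ p (Var 0) (Var 0)) by (rewrite length_firstn, length_map; lia).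
  rewrite nth_firstn. replace (p <? j) with true by (symmetry; apply Nat.ltb_lt; lia).
  rewrite (@nth_map_lt _ _ (fun c => X (snd c)) _ p d (Var 0)) by lia.
  apply erase_subst_xi. apply root_wf_cond; lia.
Qed.

Lemma root_erase_cond p : p < length cs ->
  erase (subst tau (X (fst (nth p cs d)))) = subst th (fst (nth p cs d)).
Proof. intros Hp. apply erase_subst_xi, root_wf_cond, Hp. Qed.

Lemma root_aux_conds_hold j : 1 <= j <= length cs ->
  aux_invariant (subst tau (App (HAux f i j) (L ++ repl Xv i (firstn j B)))) ->
  forall p, p < j -> clos_refl_trans _ (step rules) (subst th (fst (nth p cs d))) (subst th (snd (nth p cs d))).
Proof.
  intros Hj HI.
  assert (HA : aux_sound f i j (map (subst tau) L ++ repl (map (subst tau) Xv) i (map (subst tau) (firstn j B)))).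
  { specialize (HI _ (st_refl _)). rewrite subst_App_repl in HI. exact HI. }
  assert (Hlc : length (map (subst tau) (firstn j B)) = j)
    by (rewrite length_map, length_firstn, length_map; lia).
  edestruct (@aux_sound_inv F arity rules) as [th' [HL' [Hfr Hc]]];
    [exact Hnth|exact Hlhs|apply root_length_args|apply root_length_flags|apply root_index_range
    |exact Hlc|exact HA|].
  assert (Hag : forall x, In x (vars (cr_lhs rho)) -> th' x = th x).
  { rewrite Hlhs. apply subst_inj_vars. simpl. f_equal. rewrite <- HL', root_erase_args. auto. }
  intros p Hp. rewrite <- (subst_cond_agree Hs rho th th' root_rule_in Hlhs Hag); [| |lia].
  - rewrite <- (root_erase_bs (j:=j)) by lia. apply Hc; auto.
  - intros q Hq. rewrite <- Hfr by lia. apply root_erase_bs. lia.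
Qed.

Lemma root_rule1 :
  length cs = 0 ->
  aux_invariant (subst tau (App (HF f) (L ++ repl Xv i [top]))) ->
  aux_invariant (subst tau (X (cr_rhs rho))) /\
  root_progress (subst tau (App (HF f) (L ++ repl Xv i [top]))) (subst tau (X (cr_rhs rho))).
Proof.
  intros Hk HI. assert (Hnil : cs = []) by (destruct cs; simpl in Hk; auto; lia).
  split.
  - eapply aux_invariant_rhs; eauto; [apply aux_free_xi|].
    rewrite vars_xi, vars_App_repl, flat_map_vars_xi.
    intros x Hx. apply (strong_rule_rhs_vars Hs root_rule_in) in Hx.
    unfold rule_bs in Hx. rewrite Hnil in Hx. simpl in Hx.
    rewrite app_nil_r, Hlhs, vars_App in Hx. apply in_or_app; auto.
  - left. rewrite subst_App_repl, root_erase_lhs, erase_subst_xi by apply (strong_rule_wf_rhs Hs root_rule_in).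
    apply step_rule_instance. exists f; apply root_rule_in. rewrite Hnil. constructor.
Qed.

Lemma root_rule2 :
  0 < length cs ->
  aux_invariant (subst tau (App (HF f) (L ++ repl Xv i [top]))) ->
  aux_invariant (subst tau (App (HAux f i 1) (L ++ repl Xv i [X (fst (cnth cs 1))]))) /\
  root_progress (subst tau (App (HF f) (L ++ repl Xv i [top])))
    (subst tau (App (HAux f i 1) (L ++ repl Xv i [X (fst (cnth cs 1))]))).
Proof.
  intros Hk HI. pose proof root_index_range.
  split.
  - rewrite subst_App_repl. apply aux_invariant_App. split.
    + simpl. exists rho, ls, th, (map (subst tau) L), (map (subst tau) Xv),
        [subst tau (X (fst (cnth cs 1)))].
      repeat split; auto; try lia;
        try apply root_length_args; try apply root_length_flags; try apply root_erase_args.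
      intros p Hp. replace p with 0 by lia. simpl. unfold cnth. simpl.
      rewrite root_erase_cond by lia. apply rt_refl.
    + rewrite <- map_repl, <- map_app. eapply aux_invariant_pattern_args; eauto.
      * apply Forall_app; split; [apply aux_free_xi_list|]. apply Forall_repl; [apply aux_free_Vars|].
        constructor; [apply aux_free_xi|constructor].
      * rewrite <- vars_App with (f := HF f). rewrite !vars_App_repl, !flat_map_vars_xi. simpl.
        rewrite app_nil_r, vars_xi. intros x Hx.
        in_app_split Hx; try in_app_find.
        unfold cnth in Hx. simpl in Hx. apply (strong_rule_cond_vars Hs root_rule_in) in Hx; [|lia].
        simpl in Hx. rewrite app_nil_r, Hlhs, vars_App in Hx. apply in_or_app; auto.
  - right. rewrite !subst_App_repl, erase_Aux, erase_HF by apply root_length_args. split; auto.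
    pose proof root_length_flags.
    rewrite progress_measure_Aux, progress_measure_HF; try lia; auto; try apply root_length_args.
    unfold lex_lt, count_top. simpl. lia.
Qed.

Lemma root_rule3 :
  0 < length cs ->
  aux_invariant (subst tau (App (HAux f i (length cs)) (L ++ repl Xv i B))) ->
  aux_invariant (subst tau (X (cr_rhs rho))) /\
  root_progress (subst tau (App (HAux f i (length cs)) (L ++ repl Xv i B))) (subst tau (X (cr_rhs rho))).
Proof.
  intros Hk HI. split.
  - eapply aux_invariant_rhs; eauto; [apply aux_free_xi|].
    rewrite vars_xi, vars_App_repl, flat_map_vars_xi.
    replace (flat_map vars B) with (flat_map vars (map snd cs))
      by (rewrite <- (flat_map_vars_xi rules), map_map; auto).
    intros x Hx. apply (strong_rule_rhs_vars Hs root_rule_in) in Hx. rewrite Hlhs, vars_App in Hx.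
    unfold rule_bs in Hx. in_app_split Hx; try in_app_find.
  - left. rewrite <- (firstn_all B), length_map in HI.
    pose proof (root_aux_conds_hold (j:=length cs) ltac:(lia) HI) as Hconds.
    rewrite subst_App_repl, erase_Aux by apply root_length_args.
    rewrite root_erase_args, erase_subst_xi by apply (strong_rule_wf_rhs Hs root_rule_in).
    replace (App f (map (subst th) ls)) with (subst th (cr_lhs rho)) by (rewrite Hlhs; reflexivity).
    apply step_rule_instance. exists f; apply root_rule_in. rewrite Forall_forall. intros c Hc'.
    destruct (In_nth _ _ d Hc') as [p [Hp <-]]. apply Hconds; auto.
Qed.

Lemma root_rule4 j :
  1 <= j < length cs ->
  aux_invariant (subst tau (App (HAux f i j) (L ++ repl Xv i (firstn j B)))) ->
  aux_invariant (subst tau (App (HAux f i (S j)) (L ++ repl Xv i (firstn j B ++ [X (fst (cnth cs (S j)))])))) /\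
  root_progress (subst tau (App (HAux f i j) (L ++ repl Xv i (firstn j B))))
    (subst tau (App (HAux f i (S j)) (L ++ repl Xv i (firstn j B ++ [X (fst (cnth cs (S j)))])))).
Proof.
  intros Hj HI. pose proof root_index_range.
  pose proof (root_aux_conds_hold (j:=j) ltac:(lia) HI) as Hconds.
  assert (Hlj : length (map (subst tau) (firstn j B)) = j)
    by (rewrite length_map, length_firstn, length_map; lia).
  split.
  - rewrite subst_App_repl. apply aux_invariant_App. split.
    + simpl. exists rho, ls, th, (map (subst tau) L), (map (subst tau) Xv),
        (map (subst tau) (firstn j B ++ [X (fst (cnth cs (S j)))])).
      repeat split; auto; try lia;
        try apply root_length_args; try apply root_length_flags; try apply root_erase_args.
      * rewrite length_map, length_app, <- (length_map (subst tau)), Hlj. simpl. lia.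
      * intros p Hp. rewrite map_app, app_nth1 by lia. apply root_erase_bs. lia.
      * intros p Hp. rewrite map_app. destruct (Nat.lt_ge_cases p j) as [Hpj|Hpj].
        -- rewrite app_nth1, root_erase_bs by lia. apply Hconds; auto.
        -- replace p with j by lia. rewrite app_nth2 by lia. rewrite Hlj, Nat.sub_diag. simpl.
           unfold cnth. simpl. rewrite Nat.sub_0_r, root_erase_cond by lia. apply rt_refl.
    + rewrite <- map_repl, <- map_app. eapply aux_invariant_pattern_args; eauto.
      * apply Forall_app; split; [apply aux_free_xi_list|]. apply Forall_repl; [apply aux_free_Vars|].
        apply Forall_app; split; [|constructor; [apply aux_free_xi|constructor]].
        rewrite Forall_forall. intros a Ha'. apply in_firstn in Ha'. rewrite <- map_map in Ha'.
        apply in_map_iff in Ha'. destruct Ha' as [q [<- _]]. apply aux_free_xi.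
      * rewrite <- vars_App with (f := HF f).
        rewrite !vars_App_repl, !flat_map_vars_xi, flat_map_app, !flat_map_vars_xi_bs.
        simpl. rewrite app_nil_r, vars_xi. intros x Hx.
        in_app_split Hx; try in_app_find.
        unfold cnth in Hx. simpl in Hx. rewrite Nat.sub_0_r in Hx.
        apply (strong_rule_cond_vars Hs root_rule_in) in Hx; [|lia].
        rewrite Hlhs, vars_App in Hx. unfold rule_bs in Hx. in_app_split Hx; in_app_find.
  - right. rewrite !subst_App_repl, !erase_Aux by apply root_length_args. split; auto.
    pose proof root_length_flags.
    rewrite !progress_measure_Aux; try lia; auto; try apply root_length_args.
    + unfold lex_lt, cond_count. simpl. rewrite Hnth. lia.
    + rewrite length_map, length_app, <- (length_map (subst tau)), Hlj. simpl. lia.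
Qed.

Lemma root_rule5 j v :
  1 <= j <= length cs ->
  aux_invariant (subst tau (App (HAux f i j) (L ++ repl Xv i (firstn (j - 1) B ++ [v])))) ->
  aux_invariant (subst tau (App (HF f) (L ++ repl Xv i [bot]))) /\
  root_progress (subst tau (App (HAux f i j) (L ++ repl Xv i (firstn (j - 1) B ++ [v]))))
    (subst tau (App (HF f) (L ++ repl Xv i [bot]))).
Proof.
  intros Hj HI. pose proof root_index_range. split.
  - eapply aux_invariant_rhs; eauto.
    + apply aux_free_App; simpl; auto. apply Forall_app; split; [apply aux_free_xi_list|].
      apply Forall_repl; [apply aux_free_Vars|]. constructor; [apply aux_free_const; auto|constructor].
    + rewrite !vars_App_repl. simpl. intros x Hx. in_app_split Hx; try in_app_find.
  - right. rewrite !subst_App_repl, erase_HF, erase_Aux by apply root_length_args. split; auto.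
    pose proof root_length_flags.
    rewrite progress_measure_HF, progress_measure_Aux; try lia; auto; try apply root_length_args.
    + unfold lex_lt, count_top. simpl. lia.
    + rewrite length_map, length_app, length_firstn, length_map. simpl. lia.
Qed.

Lemma root_rule6 ys j v :
  length ys = length ls -> 1 <= j <= length ls ->
  aux_invariant (subst tau (App (HF f) (repl (map Var ys) j [v] ++ repl Xv i [top]))) ->
  aux_free v ->
  aux_invariant (subst tau (App (HF f) (repl (map Var ys) j [v] ++ repl Xv i [bot]))) /\
  root_progress (subst tau (App (HF f) (repl (map Var ys) j [v] ++ repl Xv i [top])))
    (subst tau (App (HF f) (repl (map Var ys) j [v] ++ repl Xv i [bot]))).
Proof.
  intros Hys Hj HI Hv. pose proof root_index_range.
  assert (HA6 : length (map (subst tau) (repl (map (@Var (@Hsym F)) ys) j [v])) = arity f).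
  { pose proof (proj1 root_lhs_args).
    rewrite length_map, length_repl; rewrite length_map; simpl; lia. }
  split.
  - eapply aux_invariant_rhs; eauto.
    + apply aux_free_App; simpl; auto. apply Forall_app; split.
      * apply Forall_repl; [apply aux_free_Vars|]. constructor; [auto|constructor].
      * apply Forall_repl; [apply aux_free_Vars|]. constructor; [apply aux_free_const; auto|constructor].
    + rewrite !vars_App_repl. simpl. intros x Hx. in_app_split Hx; try in_app_find.
  - right. rewrite !subst_App_repl, !erase_HF by auto. split; auto.
    pose proof root_length_flags.
    rewrite !progress_measure_HF; try lia; auto.
    unfold lex_lt, count_top. simpl. lia.
Qed.

End RootSteps.

Lemma root_step_progress {F} (arity : F -> nat) (rules : F -> list (crule F)) t t2 :
  strong_cctrs arity rules -> aux_invariant arity rules t -> xi_root arity rules t t2 ->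
  aux_invariant arity rules t2 /\ root_progress arity rules t t2.
Proof.
  intros Hs HI [l [r [tau [[_ [f [i [rho [ls [xs [Hi [Hnth [Hlhs [Hxs Hcase]]]]]]]]]] [-> ->]]]]].
  cbv zeta in Hcase.
  destruct Hcase as [[Hk [-> ->]] | [[Hk [-> ->]] | [[Hk [-> ->]] | [[j [Hj [-> ->]]] |
    [[j [v [Hj [HAP [-> ->]]]]] | [ys [j [v [Hys [Hj [HAP [-> ->]]]]]]]]]]]].
  - eapply root_rule1; eauto.
  - eapply root_rule2; eauto.
  - eapply root_rule3; eauto.
  - eapply root_rule4; eauto.
  - eapply root_rule5; eauto.
  - eapply root_rule6; eauto. eapply AP_aux_free; eauto.
Qed.

Section ErasureSteps.
Context {F : Type} (arity : F -> nat) (rules : F -> list (crule F)).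
Hypothesis Hs : strong_cctrs arity rules.
Local Notation H := (term (@Hsym F)).
Local Notation cs_step := (cs_step arity rules).
Local Notation erase := (erase arity).
Local Notation aux_invariant := (aux_invariant arity rules).
Local Notation aux_sound := (aux_sound arity rules).

Definition erase_step (t t2 : H) := erase t = erase t2 \/ step rules (erase t) (erase t2).

(* The active argument of [f_i^j] is the last recorded [c_j]; rewriting it
   keeps [a_jθ ->* erase c_j] and does not change the erasure. *)
Lemma aux_sound_active_step f i j ss1 s s' ss2 :
  mu arity (HAux f i j) (S (length ss1)) = true ->
  aux_sound f i j (ss1 ++ s :: ss2) -> erase_step s s' ->
  aux_sound f i j (ss1 ++ s' :: ss2) /\ erase_step (App (HAux f i j) (ss1 ++ s :: ss2)) (App (HAux f i j) (ss1 ++ s' :: ss2)).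
Proof.
  intros Hmu [rho [ls [th [Lh [Xl [cs' [Hn [Hi [Hl [Hj [E [HLh [HXl [Hcs [HL [Hfr Hc]]]]]]]]]]]]]]]] HE.
  unfold mu in Hmu. apply Nat.eqb_eq in Hmu.
  assert (Hmi : i - 1 < m rules f) by (unfold m; apply nth_error_Some; rewrite Hn; discriminate).
  assert (Ecs : cs' = firstn (j-1) cs' ++ [nth (j-1) cs' (Var 0)]).
  { rewrite <- firstn_succ_nth by lia. rewrite firstn_all2; auto. lia. }
  assert (E2 : ss1 ++ s :: ss2 =
    (Lh ++ firstn (i-1) Xl ++ firstn (j-1) cs') ++ nth (j-1) cs' (Var 0) :: skipn i Xl).
  { rewrite E. unfold repl. rewrite Ecs at 1. rewrite <- !app_assoc. reflexivity. }
  assert (Hlen1 : length ss1 = length (Lh ++ firstn (i-1) Xl ++ firstn (j-1) cs')).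
  { rewrite !length_app, !length_firstn. lia. }
  destruct (app_inj_length _ _ _ _ Hlen1 E2) as [Ess1 E3]. injection E3 as Es Ess2.
  split.
  - exists rho, ls, th, Lh, Xl, (firstn (j-1) cs' ++ [s']).
    repeat split; auto. all: try lia.
    + rewrite Ess1, Ess2. unfold repl. rewrite <- !app_assoc. reflexivity.
    + rewrite length_app, length_firstn. simpl. lia.
    + intros p Hp. rewrite app_nth1 by (rewrite length_firstn; lia). rewrite nth_firstn.
      replace (p <? j - 1) with true by (symmetry; apply Nat.ltb_lt; lia). apply Hfr; auto.
    + intros p Hp. destruct (Nat.lt_ge_cases p (j-1)) as [Hpj|Hpj].
      * rewrite app_nth1 by (rewrite length_firstn; lia). rewrite nth_firstn.
        replace (p <? j - 1) with true by (symmetry; apply Nat.ltb_lt; lia). apply Hc; auto.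
      * replace p with (j-1) by lia. rewrite app_nth2 by (rewrite length_firstn; lia).
        rewrite length_firstn. replace (j - 1 - Nat.min (j - 1) (length cs')) with 0 by lia.
        simpl. apply (rt_trans _ _ _ (erase s)); [rewrite Es; apply Hc; lia|].
        destruct HE as [HE|HE]; [rewrite HE; apply rt_refl|apply rt_step; auto].
  - left. simpl. rewrite !map_app. simpl. rewrite !firstn_app_le; auto; rewrite length_map; lia.
Qed.

Lemma cs_step_invariant t t2 : aux_invariant t -> cs_step t t2 ->
  aux_invariant t2 /\ erase_step t t2.
Proof.
  intros HI Hst. induction Hst as [t t2 Hr|g ss1 s s' ss2 Hmu Hst IH].
  - destruct (root_step_progress Hs HI Hr) as [HI2 Hp]. split; auto.
    destruct Hp as [Hstep|[Heq _]]; [right|left]; auto.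
  - assert (HIs : aux_invariant s) by (eapply aux_invariant_arg; [exact HI|apply in_or_app; simpl; auto]).
    destruct (IH HIs) as [HIs' HE].
    assert (Hargs : forall a, In a (ss1 ++ s' :: ss2) -> aux_invariant a).
    { intros a Ha. apply in_app_or in Ha. destruct Ha as [Ha|[<-|Ha]]; auto;
        eapply aux_invariant_arg; eauto; apply in_or_app; simpl; auto. }
    pose proof (HI _ (st_refl _)) as Hsh.
    destruct g as [| |f|f i j]; try discriminate.
    + split. apply aux_invariant_App. split; simpl; auto.
      unfold mu in Hmu. apply andb_prop in Hmu. destruct Hmu as [_ Hmu]. apply Nat.leb_le in Hmu.
      unfold erase_step. simpl. rewrite !map_app. simpl. rewrite !firstn_app_cons by (rewrite length_map; lia).
      destruct HE as [HE|HE]; [left; rewrite HE; auto|right].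
      rewrite !length_map. apply step_arg; auto.
    + destruct (aux_sound_active_step _ _ Hmu Hsh HE) as [Hsh' HE'].
      split; auto. apply aux_invariant_App. auto.
Qed.

Lemma cs_rt_invariant t t' : aux_invariant t -> clos_refl_trans _ cs_step t t' ->
  aux_invariant t' /\ clos_refl_trans _ (step rules) (erase t) (erase t').
Proof.
  intros HI Hr. revert HI. induction Hr as [a b Hab| |]; intros HI.
  - destruct (cs_step_invariant HI Hab) as [HI' [E|E]]; split; auto.
    + rewrite E; apply rt_refl.
    + apply rt_step; auto.
  - split; auto. apply rt_refl.
  - destruct (IHHr1 HI) as [H1 H2]. destruct (IHHr2 H1) as [H3 H4]. split; auto. eapply rt_trans; eauto.
Qed.

End ErasureSteps.

Section ActiveArguments.
Context {F : Type} (arity : F -> nat) (rules : F -> list (crule F)).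
Local Notation H := (term (@Hsym F)).
Local Notation cs_step := (cs_step arity rules).

Definition cs_SN (t : H) := Acc (fun a b => cs_step b a) t.

Definition args_step (l l' : list H) : Prop :=
  exists l1 s s' l2, l = l1 ++ s :: l2 /\ l' = l1 ++ s' :: l2 /\ cs_step s s'.

Lemma Acc_args_step_cons a : cs_SN a ->
  forall l, Acc (fun x y => args_step y x) l -> Acc (fun x y => args_step y x) (a :: l).
Proof.
  induction 1 as [a _ IHa]. intros l Hl. induction Hl as [l Hl' IHl]. constructor.
  intros y [l1 [s [s' [l2 [E1 [E2 Hst]]]]]]. destruct l1 as [|x l1']; simpl in *.
  - injection E1 as -> ->. subst y. apply IHa; auto. constructor; auto.
  - injection E1 as -> ->. subst y. apply IHl. exists l1', s, s', l2. auto.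
Qed.

Lemma Acc_args_step l : (forall a, In a l -> cs_SN a) -> Acc (fun x y => args_step y x) l.
Proof.
  induction l as [|a l IH]; intros Ha.
  - constructor. intros y [l1 [s [s' [l2 [E _]]]]]. destruct l1; discriminate.
  - apply Acc_args_step_cons. apply Ha; simpl; auto. apply IH. intros; apply Ha; simpl; auto.
Qed.

Lemma args_step_length l l' : args_step l l' -> length l' = length l.
Proof. intros [l1 [s [s' [l2 [-> [-> _]]]]]]. rewrite !length_app. simpl. auto. Qed.

Lemma rt_args_step_length l l' : clos_refl_trans _ args_step l l' -> length l' = length l.
Proof. induction 1; auto. apply args_step_length; auto. congruence. Qed.

Lemma rt_args_step_HF f as_ as' labs : length as_ <= arity f -> clos_refl_trans _ args_step as_ as' ->
  clos_refl_trans _ cs_step (App (HF f) (as_ ++ labs)) (App (HF f) (as' ++ labs)).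
Proof.
  intros Hl Hr. induction Hr as [a b Hab| |a b c H1 IH1 H2 IH2].
  - apply rt_step. destruct Hab as [l1 [s [s' [l2 [-> [-> Hst]]]]]]. rewrite <- !app_assoc. simpl.
    apply csctx_arg; auto. apply mu_HF_arg. rewrite length_app in Hl. simpl in Hl. lia.
  - apply rt_refl.
  - eapply rt_trans; [apply IH1; auto|]. apply IH2. rewrite (rt_args_step_length H1). auto.
Qed.

(* Termination of a term with a single active argument [c]: every
   reduction first rewrites [c] and then possibly steps at the root. *)
Lemma cs_SN_single_active g pre post c : (forall p, mu arity g p = true -> p = S (length pre)) ->
  cs_SN c ->
  (forall c', clos_refl_trans _ cs_step c c' ->
     forall t2, xi_root arity rules (App g (pre ++ c' :: post)) t2 -> cs_SN t2) ->
  cs_SN (App g (pre ++ c :: post)).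
Proof.
  intros Hm Hc. induction Hc as [c _ IH]. intros Hroot. constructor. intros y Hy.
  remember (App g (pre ++ c :: post)) as T eqn:ET. destruct Hy as [T y Hr|g' ss1 s s' ss2 Hmu Hst].
  - subst T. apply (Hroot c (rt_refl _ _ _)); auto.
  - injection ET as <- E. apply Hm in Hmu. injection Hmu as Hmu.
    destruct (app_inj_length _ _ _ _ Hmu E) as [-> E2]. injection E2 as -> ->.
    apply IH; auto. intros c' Hc' t2 Ht2. apply (Hroot c'); auto. eapply rt_trans; [apply rt_step|]; eauto.
Qed.

(* The same for [f(as_, labs)], whose active arguments are exactly [as_]. *)
Lemma cs_SN_HF f labs as_ : length as_ <= arity f -> (length as_ < arity f -> labs = []) ->
  Acc (fun x y => args_step y x) as_ ->
  (forall as', clos_refl_trans _ args_step as_ as' ->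
     forall t2, xi_root arity rules (App (HF f) (as' ++ labs)) t2 -> cs_SN t2) ->
  cs_SN (App (HF f) (as_ ++ labs)).
Proof.
  intros Hl1 Hl2 Hacc. induction Hacc as [as_ _ IH]. intros Hroot. constructor. intros y Hy.
  remember (App (HF f) (as_ ++ labs)) as T eqn:ET. destruct Hy as [T y Hr|g' ss1 s s' ss2 Hmu Hst].
  - subst T. apply (Hroot as_ (rt_refl _ _ _)); auto.
  - injection ET as Eg E. subst g'. unfold mu in Hmu. apply andb_prop in Hmu. destruct Hmu as [_ Hmu].
    apply Nat.leb_le in Hmu.
    assert (Hlt : length ss1 < length as_).
    { destruct (Nat.lt_ge_cases (length as_) (arity f)) as [Hlt|Hge].
      - specialize (Hl2 Hlt). subst labs. rewrite app_nil_r in E. subst as_. rewrite length_app. simpl. lia.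
      - lia. }
    destruct (app_cons_split_lt _ _ _ _ _ E Hlt) as [A2 [-> ->]].
    assert (Hst' : args_step (ss1 ++ s :: A2) (ss1 ++ s' :: A2)) by (exists ss1, s, s', A2; auto).
    replace (ss1 ++ s' :: A2 ++ labs) with ((ss1 ++ s' :: A2) ++ labs)
      by (rewrite <- app_assoc; reflexivity).
    apply IH; auto; try (rewrite (args_step_length Hst'); auto).
    intros as' Has t2 Ht2. apply (Hroot as'); auto. eapply rt_trans; [apply rt_step|]; eauto.
Qed.

Lemma xi_rule_lhs_App l r : xi_rule arity rules l r -> exists f ts, l = App (HF f) ts \/ exists i j, l = App (HAux f i j) ts.
Proof.
  intros [_ [f [i [rho [ls [xs [_ [_ [_ [_ Hc]]]]]]]]]]. cbv zeta in Hc.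
  destruct Hc as [[_ [-> _]]|[[_ [-> _]]|[[_ [-> _]]|[[j [_ [-> _]]]|[[j [v [_ [_ [-> _]]]]]|[ys [j [v [_ [_ [_ [-> _]]]]]]]]]]]];
    eauto 6.
Qed.

Lemma cs_SN_Var x : cs_SN (Var x).
Proof.
  constructor. intros t Hst. remember (Var x) as T. destruct Hst as [T t [l [r [tau [Hlr [E _]]]]]|]; [|discriminate].
  subst T. destruct (xi_rule_lhs_App Hlr) as [f [ts [->|[i [j ->]]]]]; discriminate.
Qed.

Lemma cs_SN_const g args : (g = HBot \/ g = HTop) -> cs_SN (App g args).
Proof.
  intros Hg. constructor. intros t Hst. remember (App g args) as T.
  destruct Hst as [T t [l [r [tau [Hlr [E _]]]]]|g' ss1 s s' ss2 Hmu _].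
  - subst T. destruct (xi_rule_lhs_App Hlr) as [f [ts [->|[i [j ->]]]]];
      injection E as E1 _; destruct Hg; subst; discriminate.
  - injection HeqT as -> _. destruct Hg; subst; discriminate.
Qed.

End ActiveArguments.

Section Termination.
Context {F : Type} (arity : F -> nat) (rules : F -> list (crule F)).
Hypothesis Hs : strong_cctrs arity rules.
Local Notation H := (term (@Hsym F)).
Local Notation wf := (wf arity).
Local Notation cs_step := (cs_step arity rules).
Local Notation d := (@Var F 0, @Var F 0).
Local Notation erase := (erase arity).
Local Notation aux_invariant := (aux_invariant arity rules).
Local Notation progress_measure := (progress_measure arity rules).
Local Notation cs_SN := (cs_SN arity rules).

Definition proper_subterm (b a : term F) := exists f ts u, a = App f ts /\ In u ts /\ subterm_eq b u.

(* [-> ∪ ⊐ ∪ ▷]; adding [▷] preserves well-foundedness since [->] and [⊐]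
   are closed under superterms. *)
Definition qd_rel (a b : term F) := step rules a b \/ sqsup rules a b \/ proper_subterm b a.

Fixpoint size (t : term F) : nat :=
  match t with Var _ => 1 | App _ ts => S (list_sum (map size ts)) end.

Lemma size_In u ts : In u ts -> size u <= list_sum (map size ts).
Proof. induction ts as [|a ts IH]; simpl; [intros []|]. intros [->|Hu]; [lia|]. specialize (IH Hu). lia. Qed.

Lemma size_subterm y u : subterm_eq y u -> size y <= size u.
Proof. induction 1; auto. simpl. pose proof (size_In _ _ H). lia. Qed.

Lemma Acc_qd_rel_subterm s : Acc (fun a b => step rules b a \/ sqsup rules b a) s ->
  forall t, subterm_eq t s -> Acc (fun a b => qd_rel b a) t.
Proof.
  induction 1 as [s _ IHs].
  assert (Hn : forall n t, size t < n -> subterm_eq t s -> Acc (fun a b => qd_rel b a) t).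
  { induction n as [|n IHn]; intros t Hsz Ht; [lia|]. constructor. intros y [Hy|[Hy|Hy]].
    - destruct (step_lift_subterm Ht Hy) as [s' [H1 H2]]. eapply IHs; [left; exact H1|exact H2].
    - apply (IHs y). right. eapply sqsup_lift_subterm; eauto. constructor.
    - destruct Hy as [f [ts [u [-> [Hu Hyu]]]]]. apply IHn.
      + pose proof (size_subterm Hyu). pose proof (size_In _ _ Hu). simpl in Hsz. lia.
      + eapply subterm_trans; [exact Hyu|]. eapply subterm_trans; [|exact Ht].
        apply subterm_arg; auto. }
  intros t Ht. apply (Hn (S (size t))); auto.
Qed.

Lemma Acc_qd_rel s : quasi_decreasing arity rules -> wf s -> Acc (fun a b => qd_rel b a) s.
Proof.
  intros HQ Hw. apply Acc_qd_rel_subterm with s; [|constructor].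
  apply Acc_of_no_chain. apply HQ; auto.
Qed.

Section InductionStep.
Variable s : term F.
Hypothesis IH : forall y, clos_trans _ qd_rel s y ->
  forall t, aux_invariant t -> clos_refl_trans _ (step rules) y (erase t) -> cs_SN t.

Lemma qd_rel_from x y : clos_refl_trans _ (step rules) s x -> qd_rel x y -> clos_trans _ qd_rel s y.
Proof.
  intros H1 H2. eapply clos_rt_t; [|apply t_step; exact H2].
  eapply clos_rt_mono; [|exact H1]. intros; left; auto.
Qed.

Definition root_reducts_SN (t : H) := forall t' t2,
  clos_refl_trans _ cs_step t t' -> progress_measure t' = progress_measure t ->
  xi_root arity rules t' t2 -> cs_SN t2.

Lemma cs_SN_HF_case f args : aux_invariant (App (HF f) args) ->
  clos_refl_trans _ (step rules) s (erase (App (HF f) args)) ->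
  root_reducts_SN (App (HF f) args) -> cs_SN (App (HF f) args).
Proof.
  intros HI Hr Hroot. rewrite <- (firstn_skipn (arity f) args).
  apply cs_SN_HF.
  - rewrite length_firstn. lia.
  - rewrite length_firstn. intros Hl. apply skipn_all2. lia.
  - apply Acc_args_step. intros a Ha. apply (IH (y:=erase a)).
    + apply (qd_rel_from (x:=erase (App (HF f) args))); auto. right; right.
      exists f, (firstn (arity f) (map erase args)), (erase a). split; auto. split; [|constructor].
      rewrite firstn_map. apply in_map; auto.
    + eapply aux_invariant_arg; eauto. eapply in_firstn; eauto.
    + apply rt_refl.
  - intros as' Has t2 Ht2. apply (Hroot (App (HF f) (as' ++ skipn (arity f) args))); auto.
    + rewrite <- (firstn_skipn (arity f) args) at 1. apply rt_args_step_HF; auto.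
      rewrite length_firstn; lia.
    + rewrite <- (firstn_skipn (arity f) args) at 2. simpl. f_equal.
      pose proof (rt_args_step_length Has) as Hl.
      rewrite !skipn_app. rewrite (skipn_all2 as') by (rewrite Hl, length_firstn; lia).
      rewrite (skipn_all2 (firstn (arity f) args)) by (rewrite length_firstn; lia).
      rewrite Hl. reflexivity.
Qed.

(* The active argument [c_j] of [f_i^j] is a reduct of [a_jθ], and
   [erase (f_i^j …) = lθ ⊐ a_jθ]. *)
Lemma cs_SN_Aux_case f i j args : aux_invariant (App (HAux f i j) args) ->
  clos_refl_trans _ (step rules) s (erase (App (HAux f i j) args)) ->
  root_reducts_SN (App (HAux f i j) args) -> cs_SN (App (HAux f i j) args).
Proof.
  intros HI Hr Hroot. pose proof (HI _ (st_refl _)) as Hsh. simpl in Hsh.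
  destruct Hsh as [rho [ls [th [Lh [Xl [cs' [Hn [Hi [Hl [Hj [E [HLh [HXl [Hcs [HL [Hfr Hc]]]]]]]]]]]]]]]].
  assert (Hmi : i - 1 < m rules f) by (unfold m; apply nth_error_Some; rewrite Hn; discriminate).
  assert (Ecs : cs' = firstn (j-1) cs' ++ [nth (j-1) cs' (Var 0)]).
  { rewrite <- firstn_succ_nth by lia. rewrite firstn_all2; auto. lia. }
  set (pre := Lh ++ firstn (i-1) Xl ++ firstn (j-1) cs').
  assert (E2 : args = pre ++ nth (j-1) cs' (Var 0) :: skipn i Xl).
  { rewrite E. unfold repl, pre. rewrite Ecs at 1. rewrite <- !app_assoc. reflexivity. }
  assert (Hlp : length pre = arity f + (i - 1) + (j - 1)).
  { unfold pre. rewrite !length_app, !length_firstn. lia. }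
  assert (Hin : In rho (rules f)) by (eapply nth_error_In; eauto).
  assert (Ea : forall c0, pre ++ c0 :: skipn i Xl = Lh ++ repl Xl i (firstn (j-1) cs' ++ [c0])).
  { intros c0. unfold pre, repl. rewrite <- !app_assoc. reflexivity. }
  rewrite E2. apply cs_SN_single_active.
  - intros p Hp. unfold mu in Hp. apply Nat.eqb_eq in Hp. lia.
  - apply (IH (y:=subst th (fst (nth (j-1) (cr_conds rho) d)))).
    + apply (qd_rel_from (x:=erase (App (HAux f i j) args))); auto. right; left.
      exists (subst th (cr_lhs rho)), rho, th, (j-1). repeat split; try lia.
      * rewrite E, erase_Aux by auto. rewrite HL, Hl. constructor.
      * exists f; auto.
      * intros q Hq. rewrite <- Hfr by lia. apply Hc; lia.
    + eapply aux_invariant_arg; eauto. rewrite E2. apply in_or_app; right; left; reflexivity.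
    + apply Hc. lia.
  - intros c' Hc' t2 Ht2. apply (Hroot (App (HAux f i j) (pre ++ c' :: skipn i Xl))); auto.
    + rewrite E2. apply cs_rt_arg; auto. unfold mu. apply Nat.eqb_eq. lia.
    + rewrite E2, !Ea, !progress_measure_Aux; auto; try lia;
        rewrite length_app, length_firstn; simpl; lia.
Qed.

Lemma cs_SN_of_reach t : aux_invariant t -> clos_refl_trans _ (step rules) s (erase t) -> cs_SN t.
Proof.
  remember (progress_measure t) as mp eqn:Hmt. revert t Hmt.
  induction mp as [mp IHm] using (well_founded_induction lex_lt_wf).
  intros t Hmt HI Hr.
  assert (Hroot : root_reducts_SN t).
  { intros t' t2 Htt' Hmm Hx. destruct (cs_rt_invariant Hs HI Htt') as [HI' Hr'].
    destruct (root_step_progress Hs HI' Hx) as [HI2 [Hst|[Heq Hlex]]].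
    - apply (IH (y:=erase t2)); auto.
      + apply (qd_rel_from (x:=erase t')). eapply rt_trans; eauto. left; auto.
      + apply rt_refl.
    - apply (IHm (progress_measure t2)); auto.
      + rewrite Hmt, <- Hmm; auto.
      + rewrite Heq. eapply rt_trans; eauto. }
  destruct t as [x|[| |f|f i j] args].
  - apply cs_SN_Var.
  - apply cs_SN_const; auto.
  - apply cs_SN_const; auto.
  - apply cs_SN_HF_case; auto.
  - apply cs_SN_Aux_case; auto.
Qed.

End InductionStep.

Lemma cs_SN_of_Acc_qd_rel s : Acc (fun a b => qd_rel b a) s ->
  forall t, aux_invariant t -> clos_refl_trans _ (step rules) s (erase t) -> cs_SN t.
Proof.
  intros Hacc. apply Acc_clos_trans_flip in Hacc. induction Hacc as [s _ IH].
  apply cs_SN_of_reach. auto.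
Qed.

Lemma wf_erase_zeta s : wfG arity rules s -> wf (erase (zeta s)).
Proof.
  induction s using term_ind_in; intros Hw; [unfold wf; simpl; auto|].
  unfold wfG in Hw. apply term_all_App in Hw. destruct Hw as [Hf Hw].
  assert (Hts : forall t, In t ts -> wf (erase (zeta t))).
  { intros t Ht. apply H; auto. rewrite Forall_forall in Hw; apply Hw; auto. }
  destruct f as [f|f R]; simpl;
    [destruct Hf as [_ Hf]; rewrite map_map, firstn_all2 by (rewrite length_map; lia)
    |destruct Hf as [_ [_ Hf]]; rewrite map_app, map_map, firstn_app_exact by (rewrite length_map; lia)];
    unfold wf; apply term_all_App; rewrite length_map; split; auto;
    rewrite Forall_forall; intros a Ha; apply in_map_iff in Ha; destruct Ha as [t [<- Ht]]; apply Hts; auto.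
Qed.

Lemma aux_free_zeta (s : term (@Gsym F)) : aux_free (zeta s).
Proof.
  induction s using term_ind_in; [exact I|].
  destruct f as [f|f R]; simpl; apply aux_free_App; simpl; auto.
  - rewrite Forall_forall. intros a Ha. apply in_map_iff in Ha. destruct Ha as [t [<- Ht]]. auto.
  - apply Forall_app. split.
    + rewrite Forall_forall. intros a Ha. apply in_map_iff in Ha. destruct Ha as [t [<- Ht]]. auto.
    + rewrite Forall_forall. intros a Ha. apply in_map_iff in Ha. destruct Ha as [b [<- _]].
      destruct b; repeat split.
Qed.

Theorem cs_terminating_of_quasi_decreasing : quasi_decreasing arity rules ->
  cs_terminating_on arity rules (fun t => exists s, wfG arity rules s /\ t = zeta s).
Proof.
  intros HQ t [s0 [Hw ->]]. apply no_chain_of_Acc.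
  apply (cs_SN_of_Acc_qd_rel (Acc_qd_rel _ HQ (wf_erase_zeta _ Hw))).
  - apply aux_free_invariant, aux_free_zeta.
  - apply rt_refl.
Qed.

End Termination.

Theorem corollary5 (F : Type) (arity : F -> nat) (rules : F -> list (crule F)) :
  strong_cctrs arity rules ->
  (quasi_decreasing arity rules <->
   cs_terminating_on arity rules
     (fun t => exists s, wfG arity rules s /\ t = zeta s)).
Proof.
  intros Hs. split.
  - apply cs_terminating_of_quasi_decreasing; auto.
  - apply quasi_decreasing_of_cs_terminating; auto.
Qed.
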